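(* Assume Assumption A. Let $(\sigma_i)_{i\in\mathbb{N}}$ be i.i.d. copies of $\sigma_0$. Fix $k\in\mathbb{N}$ and let $(\ell_i)$, $(\delta_i)$ be positive sequences with $\ell_i\to\infty$. Then there exists $c>0$ such that, for all sufficiently large $i$, \[ \mathbf{P}\big(S_i^{(k)}>\ell_i\delta_i\,\big|\,\sigma_1,\dots,\sigma_i\le\ell_i\big)<c\,\delta_i^{-1}\Big(\frac{i}{L(\ell_i)}g(\ell_i)\Big)^k. \]
   Context: $\sigma_0$ is a strictly positive random variable under $\mathbf{P}$ and $L(u):=1/\mathbf{P}(\sigma_0>u)$ satisfies $\lim_{u\to\infty}L(uv)/L(u)=1$ for all $v>0$. For an index $i$, let $\sigma_i^{(1)}\ge\dots\ge\sigma_i^{(i)}$ be the descending order statistics of $(\sigma_j)_{1\le j\le i}$, and $S_i^{(k)}:=\sum_{j=k}^{i}\sigma_i^{(j)}$. Assumption A: $L$ is continuous, and there exist functions $g,k$ with $g(u)\to0$ as $u\to\infty$, $g$ eventually monotone decreasing, such that $\lim_{u\to\infty}\big(L(uv)/L(u)-1\big)/g(u)=k(v)$ for every $v>0$, where there exists $v$ with $k(v)\neq0$ and $k(uv)\ne k(u)$ for all $u>0$. *)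

From Stdlib Require Import Reals Lra List.
Open Scope R_scope.

Record ProbSpace := {
  Omega : Type;
  meas : (Omega -> Prop) -> Prop;
  Pr : (Omega -> Prop) -> R;
  meas_full : meas (fun _ => True);
  meas_compl : forall A, meas A -> meas (fun w => ~ A w);
  meas_union : forall A : nat -> (Omega -> Prop),
      (forall n, meas (A n)) -> meas (fun w => exists n, A n w);
  Pr_ext : forall A B : Omega -> Prop, (forall w, A w <-> B w) -> Pr A = Pr B;
  Pr_nonneg : forall A, meas A -> 0 <= Pr A;
  Pr_full : Pr (fun _ => True) = 1;
  Pr_countably_additive : forall A : nat -> (Omega -> Prop),
      (forall n, meas (A n)) ->
      (forall n m w, n <> m -> A n w -> A m w -> False) ->
      infinite_sum (fun n => Pr (A n)) (Pr (fun w => exists n, A n w))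
}.

Definition random_variable (Ps : ProbSpace) (X : Omega Ps -> R) : Prop :=
  forall x, meas Ps (fun w => X w <= x).

Definition iid (Ps : ProbSpace) (sigma : nat -> Omega Ps -> R) : Prop :=
  (forall j, random_variable Ps (sigma j)) /\
  (forall j x, Pr Ps (fun w => sigma j w <= x) = Pr Ps (fun w => sigma 0%nat w <= x)) /\
  (forall (js : list nat) (xs : nat -> R), NoDup js ->
     Pr Ps (fun w => Forall (fun j => sigma j w <= xs j) js)
     = fold_right Rmult 1 (map (fun j => Pr Ps (fun w => sigma j w <= xs j)) js)).

Definition Ltail (Ps : ProbSpace) (X : Omega Ps -> R) (u : R) : R :=
  / Pr Ps (fun w => X w > u).

Definition lim_infty (f : R -> R) (l : R) : Prop :=
  forall eps, 0 < eps -> exists M, forall u, M <= u -> Rabs (f u - l) < eps.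

Definition seq_to_infty (a : nat -> R) : Prop :=
  forall M, exists N, forall i, (N <= i)%nat -> M <= a i.

Fixpoint ins_desc (x : R) (l : list R) : list R :=
  match l with
  | nil => x :: nil
  | y :: l' => if Rle_dec y x then x :: y :: l' else y :: ins_desc x l'
  end.

Fixpoint sort_desc (l : list R) : list R :=
  match l with
  | nil => nil
  | x :: l' => ins_desc x (sort_desc l')
  end.

(** S_i^{(k)} = sum_{j=k}^{i} sigma_i^{(j)}, where
    sigma_i^{(1)} >= ... >= sigma_i^{(i)} are the descending order
    statistics of sigma_1, ..., sigma_i (k >= 1). *)
Definition S_ord {Om : Type} (sigma : nat -> Om -> R) (i k : nat) (w : Om) : R :=
  fold_right Rplus 0
    (skipn (k - 1) (sort_desc (map (fun j => sigma j w) (seq 1 i)))).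

Definition AssumptionA (L g kf : R -> R) : Prop :=
  continuity L /\
  lim_infty g 0 /\
  (exists M, forall u v, M <= u -> u <= v -> g v <= g u) /\
  (forall v, 0 < v -> lim_infty (fun u => (L (u * v) / L u - 1) / g u) (kf v)) /\
  (exists v, 0 < v /\ kf v <> 0 /\ forall u, 0 < u -> kf (u * v) <> kf u).

From Stdlib Require Import Reals Lra Lia List Classical FunctionalExtensionality
  PropExtensionality ZArith Permutation.
Open Scope R_scope.

(* Write F = 1/L for the tail of sigma_0 and q = P(sigma_0 <= l); the conditioning event has
   probability q^i. If S^(k) > l delta, a dyadic layer-cake decomposition of the order statistics
   shows that for some level a_m = l/2^(m+1) at least k + n_m of the sigma_j exceed a_m, with
   n_m ~ delta (7/4)^m / 8. Given that all sigma_j <= l, the number of such exceedances is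
   binomial with mean i (F(a_m) - F(l))/q, so this has probability at most
   e^k (2 i F(l) (F(a_m)/F(l) - 1))^k / n_m. Assumption A gives F(u/2)/F(u) <= 1 + C g(u) and
   g(u/2) <= rho g(u) for large u, hence F(a_m)/F(l) - 1 = O(g(l) rho^(3m)); with rho^(3k) < 7/4
   the sum over m is O(g(l)^k), i.e. the bound is O((i g(l) / L(l))^k / delta). *)

Fixpoint sumN (f : nat -> R) (M : nat) : R :=
  match M with O => 0 | S M' => sumN f M' + f M' end.

Lemma sumN_plus f g M : sumN (fun m => f m + g m) M = sumN f M + sumN g M.
Proof. induction M; simpl; [ring|rewrite IHM; ring]. Qed.

Lemma sumN_le f g M : (forall m, (m < M)%nat -> f m <= g m) -> sumN f M <= sumN g M.
Proof. induction M; simpl; intros H; [lra|apply Rplus_le_compat; auto]. Qed.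

Lemma sumN_nonneg f M : (forall m, (m < M)%nat -> 0 <= f m) -> 0 <= sumN f M.
Proof.
  intros H. replace 0 with (sumN (fun _ => 0) M); [apply sumN_le; auto|].
  induction M; simpl; auto. rewrite IHM; auto; ring.
Qed.

Lemma sumN_scal c f M : sumN (fun m => c * f m) M = c * sumN f M.
Proof. induction M; simpl; [ring|rewrite IHM; ring]. Qed.

Lemma sumN_geometric_le x M : 0 <= x < 1 -> sumN (fun m => x ^ m) M <= / (1 - x).
Proof.
  intros Hx. assert (E : forall M, sumN (fun m => x ^ m) M = (1 - x ^ M) / (1 - x)).
  { induction M0; simpl sumN; [field; lra|]. rewrite IHM0. simpl. field. lra. }
  rewrite E. unfold Rdiv. rewrite <- (Rmult_1_l (/ (1 - x))) at 2.
  apply Rmult_le_compat_r; [left; apply Rinv_0_lt_compat; lra|].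
  pose proof (pow_le x M (proj1 Hx)). lra.
Qed.

Lemma INR_le_pow2 n : INR n <= 2 ^ n.
Proof.
  induction n; [simpl; lra|]. rewrite S_INR. simpl.
  pose proof (pow_R1_Rle 2 n ltac:(lra)). lra.
Qed.

Lemma exp_pow y n : exp y ^ n = exp (INR n * y).
Proof.
  induction n; [simpl; rewrite Rmult_0_l, exp_0; reflexivity|].
  rewrite S_INR. simpl. rewrite IHn, <- exp_plus. f_equal; ring.
Qed.

Section Events.

Variable Ps : ProbSpace.

Lemma meas_ext (A B : Omega Ps -> Prop) :
  (forall w, A w <-> B w) -> meas Ps A -> meas Ps B.
Proof.
  intros H HA. replace B with A; auto.
  apply functional_extensionality; intro w; apply propositional_extensionality; auto.
Qed.

Lemma meas_False : meas Ps (fun _ => False).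
Proof. eapply meas_ext; [|apply meas_compl, meas_full]. intro w; tauto. Qed.

Lemma meas_or A B : meas Ps A -> meas Ps B -> meas Ps (fun w => A w \/ B w).
Proof.
  intros HA HB.
  eapply meas_ext; [|apply (meas_union Ps (fun n => match n with O => A | _ => B end))].
  - intro w; split.
    + intros [[|n] Hn]; auto.
    + intros [H|H]; [exists O | exists 1%nat]; auto.
  - intros [|n]; auto.
Qed.

Lemma meas_and A B : meas Ps A -> meas Ps B -> meas Ps (fun w => A w /\ B w).
Proof.
  intros HA HB.
  eapply meas_ext; [|apply meas_compl, (meas_or _ _ (meas_compl Ps _ HA) (meas_compl Ps _ HB))].
  intro w; split; [tauto|]. intro H. destruct (classic (A w)), (classic (B w)); tauto.
Qed.

Lemma meas_Forall {X} (P : X -> Omega Ps -> Prop) l :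
  (forall x, In x l -> meas Ps (P x)) -> meas Ps (fun w => Forall (fun x => P x w) l).
Proof.
  induction l as [|x l IH]; intros H.
  - eapply meas_ext; [|apply meas_full]. intro; split; auto.
  - eapply meas_ext; [|apply (meas_and _ _ (H x (or_introl eq_refl)) (IH (fun y Hy => H y (or_intror Hy))))].
    intro w; rewrite Forall_cons_iff; tauto.
Qed.

Lemma meas_exists_lt (A : nat -> Omega Ps -> Prop) M : (forall m, meas Ps (A m)) ->
  meas Ps (fun w => exists m, (m < M)%nat /\ A m w).
Proof.
  intros HA. induction M.
  - eapply meas_ext; [|apply meas_False]. intro w; split; [tauto|intros [m [Hm _]]; lia].
  - eapply meas_ext; [|apply (meas_or _ _ IHM (HA M))]. intro w; split.
    + intros [[m [Hm H]]|H]; [exists m|exists M]; split; auto.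
    + intros [m [Hm H]]. destruct (Nat.eq_dec m M); [subst; right; auto|].
      left; exists m; split; auto; lia.
Qed.

(* A constant sequence p is summable only if p = 0. *)
Lemma Pr_False : Pr Ps (fun _ => False) = 0.
Proof.
  pose proof (Pr_countably_additive Ps (fun _ _ => False) (fun _ => meas_False)
                (fun _ _ _ _ H _ => H)) as H; cbv beta in H.
  rewrite (Pr_ext Ps (fun w => exists n : nat, False) (fun _ => False)) in H
    by (intro; split; [intros [_ x]; auto| tauto]).
  set (p := Pr Ps (fun _ => False)) in *.
  assert (Hs : forall n, sum_f_R0 (fun _ => p) n = INR (S n) * p).
  { induction n as [|n IH]; simpl sum_f_R0; [simpl; ring|]. rewrite IH, !S_INR. ring. }
  destruct (Req_dec p 0) as [E|E]; auto. exfalso.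
  destruct (H (Rabs p / 2)) as [N HN]; [apply Rdiv_lt_0_compat; [apply Rabs_pos_lt; auto|lra]|].
  pose proof (HN (S N) (le_S _ _ (le_n N))) as H1. pose proof (HN N (le_n N)) as H2.
  unfold Rdist in *. rewrite Hs in H1, H2.
  assert (Htri : Rabs p <= Rabs (INR (S (S N)) * p - p) + Rabs (INR (S N) * p - p)).
  { replace p with ((INR (S (S N)) * p - p) + - (INR (S N) * p - p)) at 1
      by (rewrite (S_INR (S N)); ring).
    rewrite <- (Rabs_Ropp (INR (S N) * p - p)). apply Rabs_triang. }
  lra.
Qed.

Lemma Pr_or_disjoint A B : meas Ps A -> meas Ps B -> (forall w, A w -> B w -> False) ->
  Pr Ps (fun w => A w \/ B w) = Pr Ps A + Pr Ps B.
Proof.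
  intros HA HB Hd.
  set (Sq := fun n : nat => match n with O => A | 1%nat => B | _ => fun _ => False end).
  assert (H1 : forall n, meas Ps (Sq n)) by (intros [|[|n]]; simpl; auto using meas_False).
  assert (H2 : forall n m w, n <> m -> Sq n w -> Sq m w -> False).
  { intros [|[|n]] [|[|m]] w Hnm; simpl; try tauto; intros; eauto; lia. }
  pose proof (Pr_countably_additive Ps Sq H1 H2) as H.
  rewrite (Pr_ext Ps (fun w => exists n, Sq n w) (fun w => A w \/ B w)) in H.
  2:{ intro w; split; [intros [[|[|n]] Hn]; simpl in Hn; tauto|].
      intros [H0|H0]; [exists O|exists 1%nat]; auto. }
  assert (Hs : forall n, sum_f_R0 (fun n => Pr Ps (Sq n)) (S n) = Pr Ps A + Pr Ps B).
  { induction n; [simpl; ring|]. rewrite tech5, IHn. simpl Sq. rewrite Pr_False. ring. }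
  set (D := Pr Ps (fun w => A w \/ B w) - (Pr Ps A + Pr Ps B)).
  apply Rminus_diag_uniq. fold D. destruct (Req_dec D 0) as [|HD]; auto. exfalso.
  destruct (H (Rabs D)) as [N HN]; [apply Rabs_pos_lt; auto|].
  specialize (HN (S N) (le_S _ _ (le_n N))). rewrite Hs in HN. unfold Rdist in HN.
  rewrite <- Rabs_Ropp in HN. unfold D in *.
  replace (- (Pr Ps A + Pr Ps B - Pr Ps (fun w => A w \/ B w)))
    with (Pr Ps (fun w => A w \/ B w) - (Pr Ps A + Pr Ps B)) in HN by ring.
  lra.
Qed.

Lemma Pr_le_mono A B : meas Ps A -> meas Ps B -> (forall w, A w -> B w) -> Pr Ps A <= Pr Ps B.
Proof.
  intros HA HB Hs.
  assert (HBA : meas Ps (fun w => B w /\ ~ A w)) by (apply meas_and; auto; apply meas_compl; auto).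
  rewrite (Pr_ext Ps B (fun w => A w \/ (B w /\ ~ A w))).
  2:{ intro w; split; [intro H; destruct (classic (A w)); tauto|intros [H|H]; auto; tauto]. }
  rewrite Pr_or_disjoint; auto; [|intros w H1 [_ H2]; auto].
  pose proof (Pr_nonneg Ps _ HBA). lra.
Qed.

Lemma Pr_le_1 A : meas Ps A -> Pr Ps A <= 1.
Proof. intros. rewrite <- (Pr_full Ps). apply Pr_le_mono; auto using meas_full. Qed.

Lemma Pr_not A : meas Ps A -> Pr Ps (fun w => ~ A w) = 1 - Pr Ps A.
Proof.
  intros HA. rewrite <- (Pr_full Ps).
  rewrite (Pr_ext Ps (fun _ => True) (fun w => A w \/ ~ A w))
    by (intro w; split; [intros; apply classic| auto]).
  rewrite Pr_or_disjoint; auto; [ring|apply meas_compl; auto].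
Qed.

Lemma Pr_or_le A B : meas Ps A -> meas Ps B -> Pr Ps (fun w => A w \/ B w) <= Pr Ps A + Pr Ps B.
Proof.
  intros HA HB.
  assert (HBA : meas Ps (fun w => B w /\ ~ A w)) by (apply meas_and; auto; apply meas_compl; auto).
  rewrite (Pr_ext Ps (fun w => A w \/ B w) (fun w => A w \/ (B w /\ ~ A w))).
  2:{ intro w; split; [intros [H|H]; auto; destruct (classic (A w)); tauto|intros [H|[H _]]; auto]. }
  rewrite Pr_or_disjoint; auto; [|intros w H [_ H']; auto].
  apply Rplus_le_compat_l, Pr_le_mono; auto. intros w [H _]; auto.
Qed.

Lemma Pr_exists_lt_le (A : nat -> Omega Ps -> Prop) M : (forall m, meas Ps (A m)) ->
  Pr Ps (fun w => exists m, (m < M)%nat /\ A m w) <= sumN (fun m => Pr Ps (A m)) M.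
Proof.
  intros HA. induction M.
  - simpl. rewrite (Pr_ext Ps _ (fun _ => False)), Pr_False; [lra|].
    intro w; split; [intros [m [Hm _]]; lia|tauto].
  - simpl sumN. rewrite (Pr_ext Ps _ (fun w => (exists m, (m < M)%nat /\ A m w) \/ A M w)).
    + eapply Rle_trans; [apply Pr_or_le; auto; apply meas_exists_lt; auto|]. lra.
    + intro w; split.
      * intros [m [Hm H]]. destruct (Nat.eq_dec m M); [subst; right; auto|].
        left; exists m; split; auto; lia.
      * intros [[m [Hm H]]|H]; [exists m|exists M]; split; auto.
Qed.

End Events.

Lemma exists_grid_between x e : 0 < e ->
  exists n a : nat, INR a / INR (S n) - INR n <= x /\ x - e < INR a / INR (S n) - INR n.
Proof.
  intros He.
  destruct (INR_unbounded (Rmax (/ e) (- x))) as [n Hn].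
  assert (Hn2 : INR n > / e) by (eapply Rle_lt_trans; [apply Rmax_l|exact Hn]).
  assert (Hn3 : INR n > - x) by (eapply Rle_lt_trans; [apply Rmax_r|exact Hn]).
  assert (HSn : 0 < INR (S n)) by (apply lt_0_INR; lia).
  set (r := (x + INR n) * INR (S n)).
  assert (Hr : 0 < r) by (apply Rmult_lt_0_compat; lra).
  destruct (archimed r) as [A1 A2].
  assert (Hup : (1 <= up r)%Z) by (assert (0 < up r)%Z by (apply lt_IZR; lra); lia).
  exists n, (Z.to_nat (up r - 1)).
  rewrite INR_IZR_INZ, Z2Nat.id, minus_IZR by lia. simpl IZR.
  assert (E1 : (r - 1) / INR (S n) = x + INR n - / INR (S n)) by (unfold r; field; lra).
  assert (E2 : r / INR (S n) = x + INR n) by (unfold r; field; lra).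
  assert ((IZR (up r) - 1) / INR (S n) <= r / INR (S n))
    by (apply Rmult_le_compat_r; [left; apply Rinv_0_lt_compat|]; lra).
  assert ((r - 1) / INR (S n) < (IZR (up r) - 1) / INR (S n))
    by (apply Rmult_lt_compat_r; [apply Rinv_0_lt_compat|]; lra).
  assert (Hinv : / INR (S n) < e).
  { rewrite <- (Rinv_inv e). apply Rinv_lt_contravar.
    - apply Rmult_lt_0_compat; auto. apply Rinv_0_lt_compat; auto.
    - rewrite S_INR; lra. }
  split; lra.
Qed.

Section RandomVariables.

Variable Ps : ProbSpace.

Lemma rv_gt X x : random_variable Ps X -> meas Ps (fun w => X w > x).
Proof. intros H. eapply meas_ext; [|apply meas_compl, (H x)]. intro w; lra. Qed.

Lemma rv_lt X x : random_variable Ps X -> meas Ps (fun w => X w < x).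
Proof.
  intros H. eapply meas_ext; [|apply (meas_union Ps (fun n w => X w <= x - / INR (S n)))].
  - intro w; split.
    + intros [n Hn]. assert (0 < / INR (S n)) by (apply Rinv_0_lt_compat, lt_0_INR; lia). lra.
    + intros Hx. destruct (INR_unbounded (/ (x - X w))) as [n Hn].
      exists n.
      assert (/ INR (S n) < x - X w).
      { rewrite <- (Rinv_inv (x - X w)). apply Rinv_lt_contravar.
        - apply Rmult_lt_0_compat; [apply Rinv_0_lt_compat; lra|apply lt_0_INR; lia].
        - rewrite S_INR; lra. }
      lra.
  - intro n; apply H.
Qed.

Lemma rv_ge X x : random_variable Ps X -> meas Ps (fun w => X w >= x).
Proof. intros H. eapply meas_ext; [|apply meas_compl, (rv_lt X x H)]. intro w; lra. Qed.

Lemma rv_const c : random_variable Ps (fun _ => c).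
Proof.
  intros x. destruct (Rle_dec c x).
  - eapply meas_ext; [|apply meas_full]. intro; split; auto.
  - eapply meas_ext; [|apply meas_False]. intro; split; [tauto|lra].
Qed.

Lemma rv_max X Y : random_variable Ps X -> random_variable Ps Y ->
  random_variable Ps (fun w => Rmax (X w) (Y w)).
Proof.
  intros HX HY x. eapply meas_ext; [|apply (meas_and Ps _ _ (HX x) (HY x))].
  intro w. unfold Rmax; destruct (Rle_dec (X w) (Y w)); split; intros; try split; lra.
Qed.

Lemma rv_min X Y : random_variable Ps X -> random_variable Ps Y ->
  random_variable Ps (fun w => Rmin (X w) (Y w)).
Proof.
  intros HX HY x. eapply meas_ext; [|apply (meas_or Ps _ _ (HX x) (HY x))].
  intro w. unfold Rmin; destruct (Rle_dec (X w) (Y w)); split; intros; try destruct H; lra.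
Qed.

(* {X + Y > t} is the union over the countable grid of {X >= a/(n+1) - n} and
   {Y > t - (a/(n+1) - n)}. *)
Lemma rv_plus X Y : random_variable Ps X -> random_variable Ps Y ->
  random_variable Ps (fun w => X w + Y w).
Proof.
  intros HX HY t.
  set (grid := fun n a : nat => INR a / INR (S n) - INR n).
  assert (Hm : meas Ps (fun w => exists n a, X w >= grid n a /\ Y w > t - grid n a)).
  { apply (meas_union Ps (fun n w => exists a, X w >= grid n a /\ Y w > t - grid n a)).
    intro n. apply (meas_union Ps (fun a w => X w >= grid n a /\ Y w > t - grid n a)).
    intro a. apply meas_and; [apply rv_ge|apply rv_gt]; auto. }
  eapply meas_ext; [|apply meas_compl, Hm].
  intro w; split; [|intros Hle [n [a [H1 H2]]]; lra].
  intros Hn. apply Rnot_lt_le. intro Hlt. apply Hn.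
  destruct (exists_grid_between (X w) (X w + Y w - t) ltac:(lra)) as [n [a [H1 H2]]].
  exists n, a. unfold grid. split; lra.
Qed.

(* {X >= 0} is the disjoint union of the slabs {n <= X < n + 1}, and P(X >= N + 1) is the tail of
   the resulting convergent series. *)
Lemma Pr_gt_vanishes X : random_variable Ps X ->
  forall eps, 0 < eps -> exists U, forall u, U <= u -> Pr Ps (fun w => X w > u) < eps.
Proof.
  intros HX eps Heps.
  set (A := fun (n : nat) w => X w >= INR n /\ X w < INR (S n)).
  assert (HA : forall n, meas Ps (A n)) by (intro n; apply meas_and; [apply rv_ge|apply rv_lt]; auto).
  assert (Hd : forall n m w, n <> m -> A n w -> A m w -> False).
  { intros n m w Hnm [H1 H2] [H3 H4]. rewrite S_INR in *.
    destruct (Nat.lt_total n m) as [Hl|[Hl|Hl]]; [|tauto|];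
      apply le_INR in Hl; rewrite S_INR in Hl; lra. }
  pose proof (Pr_countably_additive Ps A HA Hd) as H.
  rewrite (Pr_ext Ps _ (fun w => X w >= 0)) in H.
  2:{ intro w. split.
      - intros [n [Hn _]]. pose proof (pos_INR n). lra.
      - intros Hx. destruct (archimed (X w)) as [H1 H2].
        assert (Hz : (1 <= up (X w))%Z) by (assert (0 < up (X w))%Z by (apply lt_IZR; lra); lia).
        exists (Z.to_nat (up (X w) - 1)). unfold A.
        rewrite S_INR, INR_IZR_INZ, Z2Nat.id, minus_IZR by lia. simpl. lra. }
  assert (Hsplit : forall x, Pr Ps (fun w => X w >= INR x)
                    = Pr Ps (A x) + Pr Ps (fun w => X w >= INR (S x))).
  { intro x. rewrite <- Pr_or_disjoint; auto using rv_ge.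
    - apply Pr_ext. intro w; unfold A; rewrite S_INR.
      split; [intros; destruct (Rlt_dec (X w) (INR x + 1)); [left|right]; lra|intros [[]|]; lra].
    - intros w [_ H1] H2. lra. }
  assert (Hdec : forall N, Pr Ps (fun w => X w >= 0)
                    = sum_f_R0 (fun n => Pr Ps (A n)) N + Pr Ps (fun w => X w >= INR (S N))).
  { induction N.
    - exact (Hsplit 0%nat).
    - rewrite IHN, Hsplit. simpl. ring. }
  destruct (H eps Heps) as [N HN]. specialize (HN N (le_n N)). unfold Rdist in HN.
  exists (INR (S N)). intros u Hu.
  apply Rle_lt_trans with (Pr Ps (fun w => X w >= INR (S N))).
  - apply Pr_le_mono; [apply rv_gt; auto|apply rv_ge; auto|]. intros w Hw; lra.
  - rewrite (Hdec N), Rabs_minus_sym in HN.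
    replace (sum_f_R0 (fun n => Pr Ps (A n)) N + Pr Ps (fun w => X w >= INR (S N))
             - sum_f_R0 (fun n => Pr Ps (A n)) N)
      with (Pr Ps (fun w => X w >= INR (S N))) in HN by ring.
    pose proof (Rle_abs (Pr Ps (fun w => X w >= INR (S N)))). lra.
Qed.

End RandomVariables.

Fixpoint descending (l : list R) : Prop :=
  match l with nil => True | x :: l' => Forall (fun y => y <= x) l' /\ descending l' end.

Definition count_gt (a : R) (l : list R) : nat :=
  length (filter (fun x => if Rlt_dec a x then true else false) l).

Lemma count_gt_cons a x l :
  count_gt a (x :: l) = ((if Rlt_dec a x then 1 else 0) + count_gt a l)%nat.
Proof. unfold count_gt; simpl. destruct (Rlt_dec a x); reflexivity. Qed.

Lemma In_ins_desc x l y : In y (ins_desc x l) <-> x = y \/ In y l.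
Proof.
  induction l as [|z l IH]; simpl; [tauto|].
  destruct (Rle_dec z x); simpl; [tauto|]. rewrite IH. tauto.
Qed.

Lemma In_sort_desc l y : In y (sort_desc l) <-> In y l.
Proof. induction l; simpl; [tauto|]. rewrite In_ins_desc, IHl. intuition. Qed.

Lemma count_gt_ins_desc a x l : count_gt a (ins_desc x l) = count_gt a (x :: l).
Proof.
  induction l as [|z l IH]; simpl; [reflexivity|].
  destruct (Rle_dec z x); [reflexivity|]. rewrite !count_gt_cons, IH, !count_gt_cons. lia.
Qed.

Lemma count_gt_sort_desc a l : count_gt a (sort_desc l) = count_gt a l.
Proof. induction l; simpl; [reflexivity|]. rewrite count_gt_ins_desc, !count_gt_cons, IHl. reflexivity. Qed.

Lemma length_ins_desc x l : length (ins_desc x l) = S (length l).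
Proof. induction l; simpl; auto. destruct (Rle_dec a x); simpl; auto. Qed.

Lemma length_sort_desc l : length (sort_desc l) = length l.
Proof. induction l; simpl; auto. rewrite length_ins_desc; auto. Qed.

Lemma descending_ins_desc x l : descending l -> descending (ins_desc x l).
Proof.
  induction l as [|z l IH]; simpl; intros H; [split; auto|].
  destruct H as [H1 H2]. destruct (Rle_dec z x); simpl.
  - split; [|split; auto]. constructor; auto. eapply Forall_impl; [|exact H1]. intros; lra.
  - split; [|apply IH; auto]. apply Forall_forall. intros y Hy. apply In_ins_desc in Hy.
    destruct Hy as [<-|Hy]; [lra|]. rewrite Forall_forall in H1; auto.
Qed.

Lemma descending_sort_desc l : descending (sort_desc l).
Proof. induction l; simpl; auto. apply descending_ins_desc; auto. Qed.

Lemma ins_desc_descending_cons x y s : descending (y :: s) ->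
  ins_desc x (y :: s) = Rmax x y :: ins_desc (Rmin x y) s.
Proof.
  intros [H1 H2]. simpl. destruct (Rle_dec y x).
  - rewrite Rmax_left, Rmin_right by lra. f_equal.
    destruct s as [|z s]; simpl; auto. inversion H1; subst. destruct (Rle_dec z y); [reflexivity|lra].
  - rewrite Rmax_right, Rmin_left by lra. reflexivity.
Qed.

Lemma In_skipn {A} p (l : list A) z : In z (skipn p l) -> In z l.
Proof. revert l; induction p; intros [|x l]; simpl; auto. Qed.

Lemma count_gt_pos_In a l : (0 < count_gt a l)%nat -> exists z, In z l /\ a < z.
Proof.
  induction l as [|x l IH]; intros H; [unfold count_gt in H; simpl in H; lia|].
  rewrite count_gt_cons in H. destruct (Rlt_dec a x); [exists x; simpl; auto|].
  destruct (IH ltac:(lia)) as [z [Hz1 Hz2]]. exists z; simpl; auto.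
Qed.

Lemma count_gt_skipn a p s : descending s ->
  count_gt a (skipn p s) = 0%nat \/ count_gt a s = (p + count_gt a (skipn p s))%nat.
Proof.
  revert s; induction p as [|p IH]; intros s Hs; [right; simpl; auto|].
  destruct s as [|y s]; [left; reflexivity|].
  simpl skipn. destruct Hs as [H1 H2].
  destruct (IH s H2) as [E|E]; [left; auto|].
  destruct (Nat.eq_dec (count_gt a (skipn p s)) 0) as [E0|E0]; [left; auto|].
  right. destruct (count_gt_pos_In a (skipn p s) ltac:(lia)) as [z [Hz1 Hz2]].
  apply In_skipn in Hz1. rewrite Forall_forall in H1. specialize (H1 z Hz1).
  rewrite count_gt_cons. destruct (Rlt_dec a y); [lia|lra].
Qed.

Definition lsum (l : list R) : R := fold_right Rplus 0 l.

Lemma dyadic_layer_cake (l x : R) (M : nat) : 0 < l -> x <= l ->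
  x <= l / 2 ^ M + sumN (fun m => l / 2 ^ S m * (if Rlt_dec (l / 2 ^ S m) x then 1 else 0)) M.
Proof.
  intros Hl Hx. induction M; [simpl; lra|].
  cbn [sumN]. assert (H2 : 0 < 2 ^ M) by (apply pow_lt; lra).
  assert (E : l / 2 ^ M = l / 2 ^ S M + l / 2 ^ S M) by (simpl; field; lra).
  assert (Hpos : 0 < l / 2 ^ S M) by (apply Rdiv_lt_0_compat; auto; apply pow_lt; lra).
  destruct (Rlt_dec (l / 2 ^ S M) x); [lra|].
  assert (0 <= sumN (fun m => l / 2 ^ S m * (if Rlt_dec (l / 2 ^ S m) x then 1 else 0)) M).
  { apply sumN_nonneg. intros m _. destruct (Rlt_dec _ _); [|lra].
    rewrite Rmult_1_r. left; apply Rdiv_lt_0_compat; auto; apply pow_lt; lra. }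
  lra.
Qed.

Lemma lsum_dyadic_layer_cake (l : R) (L : list R) (M : nat) : 0 < l -> Forall (fun x => x <= l) L ->
  lsum L <= INR (length L) * (l / 2 ^ M)
            + sumN (fun m => l / 2 ^ S m * INR (count_gt (l / 2 ^ S m) L)) M.
Proof.
  intros Hl. induction L as [|x L IH]; intros HF.
  - simpl. rewrite Rmult_0_l, Rplus_0_l. apply sumN_nonneg. intros; rewrite Rmult_0_r; lra.
  - inversion HF; subst. simpl lsum. simpl length. rewrite S_INR.
    pose proof (dyadic_layer_cake l x M Hl H1). specialize (IH H2).
    assert (E : sumN (fun m => l / 2 ^ S m * INR (count_gt (l / 2 ^ S m) (x :: L))) M =
       sumN (fun m => l / 2 ^ S m * (if Rlt_dec (l / 2 ^ S m) x then 1 else 0)) M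
       + sumN (fun m => l / 2 ^ S m * INR (count_gt (l / 2 ^ S m) L)) M).
    { rewrite <- sumN_plus. f_equal. apply functional_extensionality. intro m.
      rewrite count_gt_cons, plus_INR. destruct (Rlt_dec _ _); simpl; ring. }
    lra.
Qed.

Lemma lsum_skipn_sort_desc_le (vals : list R) (l : R) (k M : nat) (n : nat -> nat) :
  0 < l -> Forall (fun x => x <= l) vals ->
  (forall m, (m < M)%nat -> (count_gt (l / 2 ^ S m) vals <= k - 1 + n m)%nat) ->
  lsum (skipn (k - 1) (sort_desc vals)) <=
    INR (length vals) * (l / 2 ^ M) + sumN (fun m => l / 2 ^ S m * INR (n m)) M.
Proof.
  intros Hl HF Hc.
  set (s := sort_desc vals). set (b := skipn (k - 1) s).
  assert (Hpos : forall m, 0 <= l / 2 ^ m) by (intro; left; apply Rdiv_lt_0_compat; auto; apply pow_lt; lra).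
  assert (Hb : Forall (fun x => x <= l) b).
  { apply Forall_forall. intros z Hz. apply In_skipn, (proj1 (In_sort_desc _ _)) in Hz.
    rewrite Forall_forall in HF; auto. }
  eapply Rle_trans; [apply (lsum_dyadic_layer_cake l b M Hl Hb)|].
  apply Rplus_le_compat.
  - apply Rmult_le_compat_r; auto. apply le_INR.
    unfold b, s. rewrite length_skipn, length_sort_desc. lia.
  - apply sumN_le. intros m Hm. apply Rmult_le_compat_l; auto. apply le_INR.
    specialize (Hc m Hm).
    destruct (count_gt_skipn (l / 2 ^ S m) (k - 1) s (descending_sort_desc vals)) as [E|E];
      fold b in E; [rewrite E; lia|].
    unfold s in E. rewrite count_gt_sort_desc in E. lia.
Qed.

Lemma count_gt_exceeds_of_lsum_skipn_gt (vals : list R) (l : R) (k M : nat) (n : nat -> nat) :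
  0 < l -> Forall (fun x => x <= l) vals ->
  INR (length vals) * (l / 2 ^ M) + sumN (fun m => l / 2 ^ S m * INR (n m)) M
    < lsum (skipn (k - 1) (sort_desc vals)) ->
  exists m, (m < M)%nat /\ (k + n m <= count_gt (l / 2 ^ S m) vals)%nat.
Proof.
  intros Hl HF Hgt. apply NNPP. intro Hno.
  assert (Hc : forall m, (m < M)%nat -> (count_gt (l / 2 ^ S m) vals <= k - 1 + n m)%nat).
  { intros m Hm. apply Nat.nlt_ge. intro Hlt. apply Hno. exists m. split; [auto|lia]. }
  pose proof (lsum_skipn_sort_desc_le vals l k M n Hl HF Hc). lra.
Qed.

Lemma exists_dyadic_depth (n : nat) (d l : R) : 0 < d -> 0 < l ->
  exists M, INR n * (l / 2 ^ M) <= d * l / 2.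
Proof.
  intros Hd Hl. destruct (INR_unbounded (2 * INR n / d)) as [M HM]. exists M.
  pose proof (INR_le_pow2 M). assert (H2M : 0 < 2 ^ M) by (apply pow_lt; lra).
  assert (2 * INR n < d * 2 ^ M).
  { apply (Rmult_lt_compat_r d) in HM; auto. unfold Rdiv in HM.
    rewrite Rmult_assoc, Rinv_l, Rmult_1_r in HM by lra. nra. }
  apply (Rmult_le_reg_r (2 * 2 ^ M)); [lra|].
  replace (INR n * (l / 2 ^ M) * (2 * 2 ^ M)) with (2 * INR n * l) by (field; lra).
  replace (d * l / 2 * (2 * 2 ^ M)) with (d * 2 ^ M * l) by field. nra.
Qed.

Lemma dyadic_budget (l d : R) : 0 < l -> 0 < d ->
  exists n : nat -> nat, (forall m, d * (7 / 4) ^ m / 8 < INR (n m) + 1) /\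
    forall M, sumN (fun m => l / 2 ^ S m * INR (n m)) M <= l * d / 2.
Proof.
  intros Hl Hd.
  set (b := 7 / 4).
  assert (Hb : forall m, 0 < d * b ^ m / 8)
    by (intro; apply Rdiv_lt_0_compat; [apply Rmult_lt_0_compat; [|apply pow_lt; unfold b]|]; lra).
  set (n := fun m : nat => Z.to_nat (up (d * b ^ m / 8) - 1)).
  assert (Hn : forall m, INR (n m) <= d * b ^ m / 8 < INR (n m) + 1).
  { intro m. specialize (Hb m). destruct (archimed (d * b ^ m / 8)) as [A1 A2].
    assert (Hz : (1 <= up (d * b ^ m / 8))%Z) by (assert (0 < up (d * b ^ m / 8))%Z by (apply lt_IZR; lra); lia).
    unfold n. rewrite INR_IZR_INZ, Z2Nat.id, minus_IZR by lia. simpl. lra. }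
  exists n. split; [apply Hn|]. intro M.
  apply Rle_trans with (sumN (fun m => l * d / 16 * (7 / 8) ^ m) M).
  - apply sumN_le. intros m _. destruct (Hn m) as [H1 _].
    assert (H2m : 0 < 2 ^ m) by (apply pow_lt; lra).
    assert (E78 : (7 / 8) ^ m = b ^ m / 2 ^ m)
      by (unfold b, Rdiv; rewrite <- pow_inv, <- Rpow_mult_distr; f_equal; field).
    rewrite E78. apply Rle_trans with (l / 2 ^ S m * (d * b ^ m / 8)).
    + apply Rmult_le_compat_l; auto. left; apply Rdiv_lt_0_compat; auto; apply pow_lt; lra.
    + right. simpl. field. lra.
  - rewrite sumN_scal. pose proof (sumN_geometric_le (7 / 8) M ltac:(lra)) as Hg.
    replace (/ (1 - 7 / 8)) with 8 in Hg by field.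
    assert (0 <= l * d / 16) by (apply Rmult_le_pos; [apply Rmult_le_pos|]; lra).
    apply Rle_trans with (l * d / 16 * 8); [apply Rmult_le_compat_l; auto|right; field].
Qed.

(* Insertion sort of random variables through max/min: it agrees with [sort_desc] at every
   outcome and visibly preserves measurability. *)
Fixpoint ins_desc_fun {Om} (f : Om -> R) (L : list (Om -> R)) : list (Om -> R) :=
  match L with
  | nil => f :: nil
  | h :: L' => (fun w => Rmax (f w) (h w)) :: ins_desc_fun (fun w => Rmin (f w) (h w)) L'
  end.

Fixpoint sort_desc_fun {Om} (L : list (Om -> R)) : list (Om -> R) :=
  match L with nil => nil | f :: L' => ins_desc_fun f (sort_desc_fun L') end.

Definition eval_at {Om} (w : Om) (L : list (Om -> R)) : list R := map (fun f => f w) L.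

Lemma eval_at_ins_desc_fun {Om} (w : Om) f L : descending (eval_at w L) ->
  eval_at w (ins_desc_fun f L) = ins_desc (f w) (eval_at w L).
Proof.
  revert f; induction L as [|h L IH]; intros f Hd; [reflexivity|].
  change (eval_at w (h :: L)) with (h w :: eval_at w L) in *.
  rewrite ins_desc_descending_cons by exact Hd. simpl. f_equal. apply IH. apply Hd.
Qed.

Lemma eval_at_sort_desc_fun {Om} (w : Om) L : eval_at w (sort_desc_fun L) = sort_desc (eval_at w L).
Proof.
  induction L as [|f L IH]; [reflexivity|].
  simpl sort_desc_fun. rewrite eval_at_ins_desc_fun, IH; [reflexivity|].
  rewrite IH; apply descending_sort_desc.
Qed.

Lemma S_ord_rv (Ps : ProbSpace) sigma i k : (forall j, random_variable Ps (sigma j)) ->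
  random_variable Ps (S_ord sigma i k).
Proof.
  intros Hrv.
  assert (Hins : forall f L, random_variable Ps f -> Forall (random_variable Ps) L ->
            Forall (random_variable Ps) (ins_desc_fun f L)).
  { intros f L; revert f; induction L as [|h L IH]; intros f Hf HL; simpl; [constructor; auto|].
    inversion HL; subst. constructor; [apply rv_max; auto|apply IH; auto; apply rv_min; auto]. }
  assert (Hsort : forall L, Forall (random_variable Ps) L ->
            Forall (random_variable Ps) (sort_desc_fun L)).
  { induction L; simpl; intros H; auto. inversion H; subst. apply Hins; auto. }
  assert (Hsum : forall L, Forall (random_variable Ps) L ->
            random_variable Ps (fun w => lsum (eval_at w L))).
  { induction L as [|f L IH]; intros H; simpl; [apply rv_const|].
    inversion H; subst. apply rv_plus; auto. }
  set (L := skipn (k - 1) (sort_desc_fun (map sigma (seq 1 i)))).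
  assert (HL : Forall (random_variable Ps) L).
  { apply Forall_forall. intros f Hf. apply In_skipn in Hf.
    revert f Hf. apply Forall_forall, Hsort, Forall_forall. intros f Hf.
    apply in_map_iff in Hf. destruct Hf as [j [<- _]]. apply Hrv. }
  intros x. eapply meas_ext; [|apply (Hsum L HL x)].
  intro w. unfold S_ord, L. replace (eval_at w (skipn (k - 1) (sort_desc_fun (map sigma (seq 1 i)))))
    with (skipn (k - 1) (sort_desc (map (fun j => sigma j w) (seq 1 i)))); [reflexivity|].
  unfold eval_at. rewrite <- skipn_map. fold (eval_at w (sort_desc_fun (map sigma (seq 1 i)))).
  rewrite eval_at_sort_desc_fun. unfold eval_at. rewrite map_map. reflexivity.
Qed.

Lemma pow_le_pow_of_le_1 x m n : 0 <= x <= 1 -> (m <= n)%nat -> x ^ n <= x ^ m.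
Proof.
  intros H Hmn. replace n with (m + (n - m))%nat by lia. rewrite pow_add.
  assert (0 <= x ^ m) by (apply pow_le; lra).
  assert (x ^ (n - m) <= 1).
  { clear Hmn. induction (n - m)%nat; simpl; [lra|]. pose proof (pow_le x n0 (proj1 H)). nra. }
  assert (0 <= x ^ (n - m)) by (apply pow_le; lra). nra.
Qed.

Lemma INR_le_fact r : INR r <= INR (fact r).
Proof. apply le_INR. induction r; simpl; [lia|]. pose proof (lt_O_fact r). nia. Qed.

Lemma pow_div_e_le_fact r : (INR r / exp 1) ^ r <= INR (fact r).
Proof.
  pose proof exp_le_3 as He3. assert (He1 : 1 < exp 1) by (pose proof (exp_ineq1 1 ltac:(lra)); lra).
  induction r as [|[|r] IH]; [simpl; lra| |].
  - assert (/ exp 1 < 1) by (apply (Rmult_lt_reg_r (exp 1)); [lra|rewrite Rinv_l by lra; lra]).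
    simpl. unfold Rdiv. lra.
  - set (n := S r) in *. assert (Hn : 0 < INR n) by (apply lt_0_INR; unfold n; lia).
    assert (HS : 0 < INR (S n)) by (apply lt_0_INR; lia).
    assert (Hinv : 0 < / INR n) by (apply Rinv_0_lt_compat; lra).
    assert (E : (INR (S n) / exp 1) ^ S n
                = INR (S n) / exp 1 * ((INR n / exp 1) ^ n * (1 + / INR n) ^ n)).
    { rewrite <- Rpow_mult_distr.
      replace (INR n / exp 1 * (1 + / INR n)) with (INR (S n) / exp 1) by (rewrite S_INR; field; lra).
      reflexivity. }
    assert (Hbase : (1 + / INR n) ^ n <= exp 1).
    { apply Rle_trans with (exp (/ INR n) ^ n); [apply pow_incr; split; [lra|apply exp_ineq1_le]|].
      rewrite exp_pow. right. f_equal. field. lra. }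
    assert (H0 : 0 <= (INR n / exp 1) ^ n)
      by (apply pow_le, Rmult_le_pos; [lra|left; apply Rinv_0_lt_compat; lra]).
    assert (H2 : (INR n / exp 1) ^ n * (1 + / INR n) ^ n <= INR (fact n) * exp 1)
      by (apply Rmult_le_compat; auto; apply pow_le; lra).
    rewrite E, fact_simpl, mult_INR.
    apply Rle_trans with (INR (S n) / exp 1 * (INR (fact n) * exp 1)); [|right; field; lra].
    apply Rmult_le_compat_l; auto. apply Rmult_le_pos; [lra|left; apply Rinv_0_lt_compat; lra].
Qed.

(* If e mu >= r the bound 1 suffices; otherwise r! >= (r/e)^r gives
   mu^r/r! <= (e mu/r)^r <= (e mu/r)^k. *)
Lemma Rmin_1_pow_div_fact_le (mu : R) (r k : nat) : (1 <= k)%nat -> (k <= r)%nat -> 0 <= mu ->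
  Rmin 1 (mu ^ r / INR (fact r)) <= exp 1 ^ k * mu ^ k / INR r.
Proof.
  intros Hk Hkr Hmu.
  pose proof exp_le_3 as He3. assert (He1 : 1 < exp 1) by (pose proof (exp_ineq1 1 ltac:(lra)); lra).
  assert (Hr : 0 < INR r) by (apply lt_0_INR; lia).
  assert (Hr1 : 1 <= INR r) by (apply (le_INR 1); lia).
  assert (Hek : 1 <= exp 1 ^ k) by (apply pow_R1_Rle; lra).
  assert (Hf : 0 < INR (fact r)) by apply INR_fact_lt_0.
  assert (Hmk : 0 <= mu ^ k) by (apply pow_le; auto).
  assert (Hir : 0 < / INR r) by (apply Rinv_0_lt_compat; auto).
  destruct (Rle_dec mu 1) as [Hm1|Hm1].
  - eapply Rle_trans; [apply Rmin_r|]. unfold Rdiv.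
    assert (mu ^ r <= mu ^ k) by (apply pow_le_pow_of_le_1; auto; lra).
    assert (/ INR (fact r) <= / INR r) by (apply Rinv_le_contravar; auto; apply INR_le_fact).
    apply Rle_trans with (mu ^ k * / INR r).
    + apply Rmult_le_compat; auto; [apply pow_le|left; apply Rinv_0_lt_compat]; auto.
    + assert (0 <= mu ^ k * / INR r) by (apply Rmult_le_pos; lra).
      assert (0 <= (exp 1 ^ k - 1) * (mu ^ k * / INR r)) by (apply Rmult_le_pos; lra). nra.
  - rewrite <- Rpow_mult_distr. set (y := exp 1 * mu). assert (Hy : 1 <= y) by (unfold y; nra).
    destruct (Rle_dec (INR r) y) as [Hry|Hry].
    + eapply Rle_trans; [apply Rmin_l|]. assert (y <= y ^ k) by (rewrite <- (pow_1 y) at 1; apply Rle_pow; auto).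
      apply (Rmult_le_reg_r (INR r)); auto. unfold Rdiv. rewrite Rmult_assoc, Rinv_l, Rmult_1_r by lra. lra.
    + eapply Rle_trans; [apply Rmin_r|]. apply Rnot_le_lt in Hry.
      assert (Hpos : 0 < (INR r / exp 1) ^ r) by (apply pow_lt, Rdiv_lt_0_compat; lra).
      assert (H1 : mu ^ r / INR (fact r) <= mu ^ r / (INR r / exp 1) ^ r).
      { unfold Rdiv. apply Rmult_le_compat_l; [apply pow_le; auto|].
        apply Rinv_le_contravar; auto. apply pow_div_e_le_fact. }
      assert (E : mu ^ r / (INR r / exp 1) ^ r = (y / INR r) ^ r).
      { unfold y, Rdiv. rewrite !Rpow_mult_distr, !pow_inv. field. split; apply pow_nonzero; lra. }
      assert (Hz : 0 <= y / INR r <= 1).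
      { split; [apply Rmult_le_pos; lra|]. apply (Rmult_le_reg_r (INR r)); auto.
        unfold Rdiv. rewrite Rmult_assoc, Rinv_l by lra. lra. }
      assert (H2 : (y / INR r) ^ r <= (y / INR r) ^ k) by (apply pow_le_pow_of_le_1; auto).
      assert (E2 : (y / INR r) ^ k = y ^ k / INR r ^ k) by (unfold Rdiv; rewrite Rpow_mult_distr, pow_inv; reflexivity).
      assert (H3 : INR r <= INR r ^ k) by (rewrite <- (pow_1 (INR r)) at 1; apply Rle_pow; auto).
      assert (H4 : y ^ k / INR r ^ k <= y ^ k / INR r).
      { unfold Rdiv. apply Rmult_le_compat_l; [apply pow_le; lra|]. apply Rinv_le_contravar; auto. }
      lra.
Qed.

Lemma pow_div_fact_succ_le n r : 0 <= n ->
  n ^ r / INR (fact r) + n ^ S r / INR (fact (S r)) <= (n + 1) ^ S r / INR (fact (S r)).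
Proof.
  intros Hn.
  assert (Hbin : forall r, n ^ S r + INR (S r) * n ^ r <= (n + 1) ^ S r).
  { induction r0 as [|r0 IH]; [simpl; lra|].
    rewrite (S_INR (S r0)). change ((n + 1) ^ S (S r0)) with ((n + 1) * (n + 1) ^ S r0).
    assert (0 <= n ^ r0) by (apply pow_le; auto).
    apply Rle_trans with ((n + 1) * (n ^ S r0 + INR (S r0) * n ^ r0));
      [|apply Rmult_le_compat_l; lra].
    change (n ^ S (S r0)) with (n * (n * n ^ r0)). change (n ^ S r0) with (n * n ^ r0).
    assert (0 <= INR (S r0)) by apply pos_INR. set (y := n ^ r0) in *. nra. }
  assert (Hf : 0 < INR (fact r)) by apply INR_fact_lt_0.
  assert (HS : 0 < INR (S r)) by (apply lt_0_INR; lia).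
  rewrite fact_simpl, mult_INR.
  replace (n ^ r / INR (fact r) + n ^ S r / (INR (S r) * INR (fact r)))
    with ((n ^ S r + INR (S r) * n ^ r) / (INR (S r) * INR (fact r))) by (field; lra).
  apply Rmult_le_compat_r; [left; apply Rinv_0_lt_compat, Rmult_lt_0_compat; auto|apply Hbin].
Qed.

Lemma Rplus_le_pow_div_fact_step_le (n x q g PB P1 P2 : R) (r m : nat) :
  0 <= n -> 0 <= x -> 0 <= g <= q -> 0 <= PB ->
  P1 <= n ^ r / INR (fact r) * x ^ r * q ^ m * (x * q * PB) ->
  P2 <= n ^ S r / INR (fact (S r)) * x ^ S r * q ^ m * (g * PB) ->
  P1 + P2 <= (n + 1) ^ S r / INR (fact (S r)) * x ^ S r * q ^ S m * PB.
Proof.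
  intros Hn Hx Hg HPB H1 H2.
  assert (Hqm : 0 <= q ^ m) by (apply pow_le; lra).
  assert (Hxr : 0 <= x ^ S r) by (apply pow_le; auto).
  assert (Hf : 0 <= n ^ S r / INR (fact (S r)))
    by (apply Rmult_le_pos; [apply pow_le; auto|left; apply Rinv_0_lt_compat, INR_fact_lt_0]).
  apply Rle_trans with ((n ^ r / INR (fact r) + n ^ S r / INR (fact (S r))) * x ^ S r * q ^ S m * PB).
  - replace ((n ^ r / INR (fact r) + n ^ S r / INR (fact (S r))) * x ^ S r * q ^ S m * PB)
      with (n ^ r / INR (fact r) * x ^ r * q ^ m * (x * q * PB)
            + n ^ S r / INR (fact (S r)) * x ^ S r * q ^ m * (q * PB)) by (simpl; ring).
    apply Rplus_le_compat; [exact H1|].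
    eapply Rle_trans; [exact H2|]. apply Rmult_le_compat_l; [|apply Rmult_le_compat_r; lra].
    apply Rmult_le_pos; [apply Rmult_le_pos|]; auto.
  - apply Rmult_le_compat_r; auto. apply Rmult_le_compat_r; [simpl; apply Rmult_le_pos; lra|].
    apply Rmult_le_compat_r; auto. apply pow_div_fact_succ_le; auto.
Qed.

Section Independence.

Variable Ps : ProbSpace.
Variable sigma : nat -> Omega Ps -> R.
Hypothesis Hiid : iid Ps sigma.

Let Hrv : forall j, random_variable Ps (sigma j) := proj1 Hiid.

Definition cdf (x : R) : R := Pr Ps (fun w => sigma 0%nat w <= x).

Lemma cdf_le_mono x y : x <= y -> cdf x <= cdf y.
Proof. intros H. apply Pr_le_mono; try apply Hrv. intros; lra. Qed.

Lemma cdf_nonneg x : 0 <= cdf x.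
Proof. apply Pr_nonneg, Hrv. Qed.

Definition tail_prob (x : R) : R := Pr Ps (fun w => sigma 0%nat w > x).

Lemma cdf_eq_1_minus_tail_prob x : cdf x = 1 - tail_prob x.
Proof. unfold cdf, tail_prob. rewrite <- Pr_not by apply rv_gt, Hrv. apply Pr_ext. intro w; lra. Qed.

Definition in_box_constraint (w : Omega Ps) (t : nat * option R * R) : Prop :=
  let '(j, lo, hi) := t in
  (match lo with None => True | Some a => a < sigma j w end) /\ sigma j w <= hi.

Definition in_box (bs : list (nat * option R * R)) (w : Omega Ps) : Prop :=
  Forall (in_box_constraint w) bs.

Definition box_weight (t : nat * option R * R) : R :=
  let '(j, lo, hi) := t in cdf hi - match lo with None => 0 | Some a => cdf a end.

Definition box_ordered (bs : list (nat * option R * R)) : Prop :=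
  Forall (fun t => match t with (_, Some a, hi) => a <= hi | _ => True end) bs.

Definition box_indices (bs : list (nat * option R * R)) : list nat := map (fun t => fst (fst t)) bs.

Definition prodR (l : list R) : R := fold_right Rmult 1 l.

Lemma meas_in_box bs : meas Ps (in_box bs).
Proof.
  apply (meas_Forall Ps (fun t w => in_box_constraint w t)). intros [[j [a|]] hi] _; simpl.
  - apply meas_and; [apply rv_gt|]; apply Hrv.
  - eapply meas_ext; [|apply (Hrv j hi)]. intro w; tauto.
Qed.

Lemma meas_in_box_le bs js xs :
  meas Ps (fun w => in_box bs w /\ Forall (fun j => sigma j w <= xs j) js).
Proof.
  apply meas_and; [apply meas_in_box|].
  apply (meas_Forall Ps (fun j w => sigma j w <= xs j)). intros; apply Hrv.
Qed.

(* Induction on bs: the constraint a < sigma_j <= h is the difference of sigma_j <= h and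
   sigma_j <= a, each of which joins the js-part with an updated bound. *)
Lemma Pr_in_box_le bs js xs : box_ordered bs -> NoDup (box_indices bs ++ js) ->
  Pr Ps (fun w => in_box bs w /\ Forall (fun j => sigma j w <= xs j) js)
  = prodR (map box_weight bs) * prodR (map (fun j => cdf (xs j)) js).
Proof.
  pose proof Hiid as [_ [Hlaw Hind]].
  set (upd := fun (xs : nat -> R) j h j' => if Nat.eq_dec j' j then h else xs j').
  revert js xs. induction bs as [|t bs IH]; intros js xs Hv Hnd.
  - simpl. rewrite Rmult_1_l.
    rewrite (Pr_ext Ps _ (fun w => Forall (fun j => sigma j w <= xs j) js))
      by (intro; unfold in_box; split; [tauto|split; auto]).
    rewrite Hind by exact Hnd. unfold prodR, cdf. f_equal. apply map_ext. intro j; apply Hlaw.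
  - destruct t as [[j lo] h]. simpl in Hnd. inversion Hnd as [|? ? Hnin Hnd']. subst.
    assert (Hnd2 : NoDup (box_indices bs ++ j :: js))
      by (eapply Permutation_NoDup; [apply Permutation_middle|exact Hnd]).
    assert (Hj : ~ In j js) by (intro; apply Hnin; apply in_or_app; auto).
    inversion Hv as [|? ? Hv1 Hv2]; subst.
    assert (Hupd : forall hh w, Forall (fun j' => sigma j' w <= upd xs j hh j') (j :: js)
                               <-> sigma j w <= hh /\ Forall (fun j' => sigma j' w <= xs j') js).
    { intros hh w. rewrite Forall_cons_iff, !Forall_forall. unfold upd.
      destruct (Nat.eq_dec j j); [|tauto].
      split; intros [H1 H2]; split; auto; intros x Hx; specialize (H2 x Hx);
        destruct (Nat.eq_dec x j); subst; tauto. }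
    assert (Eh : forall hh, Pr Ps (fun w => in_box bs w /\ Forall (fun j' => sigma j' w <= upd xs j hh j') (j :: js))
      = prodR (map box_weight bs) * (cdf hh * prodR (map (fun j' => cdf (xs j')) js))).
    { intro hh. rewrite IH by auto. f_equal. simpl. unfold upd at 1.
      destruct (Nat.eq_dec j j); [|tauto]. f_equal. f_equal. apply map_ext_in. intros x Hx.
      unfold upd. destruct (Nat.eq_dec x j); subst; tauto. }
    destruct lo as [a|].
    + assert (Ea := Eh a). specialize (Eh h).
      rewrite (Pr_ext Ps _
        (fun w => (in_box ((j, Some a, h) :: bs) w /\ Forall (fun j0 => sigma j0 w <= xs j0) js) \/
                  (in_box bs w /\ Forall (fun j' => sigma j' w <= upd xs j a j') (j :: js)))) in Eh.
      2:{ intro w. unfold in_box. rewrite !Hupd, Forall_cons_iff. simpl in Hv1 |- *. split.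
          - intros [H1 [H2 H3]]. destruct (Rlt_dec a (sigma j w)); [left|right]; repeat split; auto; lra.
          - intros [[[[H1 H2] H3] H4]|[H1 [H2 H3]]]; repeat split; auto; lra. }
      rewrite Pr_or_disjoint in Eh; [|apply meas_in_box_le..|].
      * rewrite Ea in Eh. simpl. unfold prodR in *. simpl. lra.
      * intros w [HA _] [_ H2]. apply Hupd in H2. inversion HA as [|? ? Hi _]; subst.
        simpl in Hi. lra.
    + transitivity (Pr Ps (fun w => in_box bs w /\ Forall (fun j' => sigma j' w <= upd xs j h j') (j :: js))).
      * apply Pr_ext. intro w. unfold in_box. rewrite Hupd, Forall_cons_iff. simpl. tauto.
      * rewrite Eh. unfold prodR; simpl. ring.
Qed.

Lemma Pr_in_box bs : box_ordered bs -> NoDup (box_indices bs) ->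
  Pr Ps (in_box bs) = prodR (map box_weight bs).
Proof.
  intros Hv Hnd.
  rewrite (Pr_ext Ps _ (fun w => in_box bs w /\ Forall (fun j => sigma j w <= 0) nil))
    by (intro; split; auto; tauto).
  rewrite (Pr_in_box_le bs nil (fun _ => 0)); auto; [simpl; unfold prodR; simpl; ring|].
  rewrite app_nil_r; auto.
Qed.

Definition count_gt_rv (a : R) (js : list nat) (w : Omega Ps) : nat :=
  count_gt a (map (fun j => sigma j w) js).

Lemma meas_count_gt_rv_ge a js r : meas Ps (fun w => (r <= count_gt_rv a js w)%nat).
Proof.
  revert r; induction js as [|j js IH]; intros r.
  - destruct r.
    + eapply meas_ext; [|apply meas_full]. intro; split; auto; intros; lia.
    + eapply meas_ext; [|apply meas_False]. intro w; unfold count_gt_rv, count_gt; simpl; split; [tauto|lia].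
  - eapply meas_ext; [|apply (meas_or Ps _ _ (meas_and Ps _ _ (rv_gt Ps _ a (Hrv j)) (IH (r - 1)%nat))
                                          (meas_and Ps _ _ (Hrv j a) (IH r)))].
    intro w. unfold count_gt_rv. simpl map. rewrite count_gt_cons.
    destruct (Rlt_dec a (sigma j w)); split.
    + intros [[_ H]|[H _]]; [lia|lra].
    + intros H; left; split; [assumption|lia].
    + intros [[H _]|[_ H]]; [lra|lia].
    + intros H; right; split; [lra|lia].
Qed.

Definition count_event (a l : R) (js : list nat) (r : nat) bs (w : Omega Ps) : Prop :=
  (r <= count_gt_rv a js w)%nat /\ Forall (fun j => sigma j w <= l) js /\ in_box bs w.

Lemma meas_count_event a l js r bs : meas Ps (count_event a l js r bs).
Proof.
  apply meas_and; [apply meas_count_gt_rv_ge|]. apply meas_and; [|apply meas_in_box].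
  apply (meas_Forall Ps (fun j w => sigma j w <= l)). intros; apply Hrv.
Qed.

Lemma count_event_cons_0 a l j js bs w :
  count_event a l (j :: js) 0 bs w <-> count_event a l js 0 ((j, None, l) :: bs) w.
Proof. unfold count_event, in_box. rewrite !Forall_cons_iff. simpl. intuition lia. Qed.

Lemma count_event_cons_S a l j js r bs w : a <= l ->
  count_event a l (j :: js) (S r) bs w <->
  count_event a l js r ((j, Some a, l) :: bs) w \/ count_event a l js (S r) ((j, None, a) :: bs) w.
Proof.
  intros Hal. unfold count_event, in_box, count_gt_rv. simpl map.
  rewrite count_gt_cons, !Forall_cons_iff. simpl.
  destruct (Rlt_dec a (sigma j w)); split.
  - intros [H1 [[H2 H3] H4]]. left. repeat split; auto; lia.
  - intros [[H1 [H2 [[H3 H4] H5]]]|[H1 [H2 [[H3 H4] H5]]]]; [|lra]. repeat split; auto; lia.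
  - intros [H1 [[H2 H3] H4]]. right. repeat split; auto; lia || lra.
  - intros [[H1 [H2 [[H3 H4] H5]]]|[H1 [H2 [[H3 H4] H5]]]]; [lra|]. repeat split; auto; lia || lra.
Qed.

(* Induction on js, splitting on whether the first sigma_j exceeds a; the box records that
   choice, so every event met along the way has product form. *)
Lemma Pr_count_event_le a l : a <= l -> 0 < cdf l ->
  forall js r bs, box_ordered bs -> NoDup (box_indices bs ++ js) ->
  Pr Ps (count_event a l js r bs) <=
    INR (length js) ^ r / INR (fact r) * ((cdf l - cdf a) / cdf l) ^ r
    * cdf l ^ length js * Pr Ps (in_box bs).
Proof.
  intros Hal Hq. set (q := cdf l) in *. set (p := q - cdf a).
  assert (Hp : 0 <= p) by (pose proof (cdf_le_mono a l Hal); unfold p, q; lra).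
  set (x := p / q).
  assert (Hx : 0 <= x) by (apply Rmult_le_pos; [auto|left; apply Rinv_0_lt_compat; auto]).
  induction js as [|j js IH]; intros r bs Hv Hnd.
  - destruct r.
    + rewrite (Pr_ext Ps _ (in_box bs))
        by (intro w; unfold count_event; split; [tauto|intros H; split; [lia|split; auto]]).
      simpl. lra.
    + rewrite (Pr_ext Ps _ (fun _ => False)), Pr_False.
      * pose proof (Pr_nonneg Ps _ (meas_in_box bs)). simpl. unfold Rdiv. lra.
      * intro w; unfold count_event, count_gt_rv, count_gt; simpl; split; [lia|tauto].
  - simpl in Hnd.
    assert (Hnd2 : NoDup (j :: box_indices bs ++ js))
      by (eapply Permutation_NoDup; [apply Permutation_sym, Permutation_middle|exact Hnd]).
    assert (Hnd3 : NoDup (j :: box_indices bs)).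
    { inversion Hnd2; subst. constructor; [intro; apply H1; apply in_or_app; auto|].
      eapply NoDup_app_remove_r; eauto. }
    assert (Hbox : forall lo hi, box_ordered ((j, lo, hi) :: bs) ->
      Pr Ps (in_box ((j, lo, hi) :: bs)) = box_weight (j, lo, hi) * Pr Ps (in_box bs)).
    { intros lo hi Hv'. rewrite !Pr_in_box; auto. eapply NoDup_app_remove_r; eauto. }
    set (n := INR (length js)). set (PB := Pr Ps (in_box bs)).
    assert (HPB : 0 <= PB) by apply Pr_nonneg, meas_in_box.
    assert (Hn : 0 <= n) by apply pos_INR.
    simpl length. rewrite S_INR. fold n. destruct r.
    + rewrite (Pr_ext Ps _ _ (count_event_cons_0 a l j js bs)).
      eapply Rle_trans; [apply IH; [constructor; auto|exact Hnd2]|].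
      rewrite Hbox by (constructor; auto). simpl. fold q. fold n PB. lra.
    + rewrite (Pr_ext Ps _ _ (fun w => count_event_cons_S a l j js r bs w Hal)).
      eapply Rle_trans; [apply Pr_or_le; apply meas_count_event|].
      assert (Hb1 := IH r ((j, Some a, l) :: bs) ltac:(constructor; auto) Hnd2).
      assert (Hb2 := IH (S r) ((j, None, a) :: bs) ltac:(constructor; auto) Hnd2).
      rewrite Hbox in Hb1, Hb2 by (constructor; auto). simpl box_weight in Hb1, Hb2.
      fold q p x n PB in Hb1, Hb2 |- *. rewrite Rminus_0_r in Hb2.
      assert (Hca : 0 <= cdf a <= q) by (split; [apply cdf_nonneg|apply cdf_le_mono, Hal]).
      replace p with (x * q) in Hb1 by (unfold x; field; lra).
      apply (Rplus_le_pow_div_fact_step_le n x q (cdf a) PB); auto.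
Qed.

Lemma prodR_map_const {X} (c : R) (s : list X) : prodR (map (fun _ => c) s) = c ^ length s.
Proof. induction s as [|x s IH]; [reflexivity|]. unfold prodR in *; simpl. rewrite IH. reflexivity. Qed.

Lemma Pr_all_le l i :
  Pr Ps (fun w => forall j, (1 <= j <= i)%nat -> sigma j w <= l) = cdf l ^ i.
Proof.
  rewrite (Pr_ext Ps _ (fun w => in_box nil w /\ Forall (fun j => sigma j w <= (fun _ => l) j) (seq 1 i))).
  - rewrite Pr_in_box_le, prodR_map_const, length_seq; [|constructor|apply seq_NoDup].
    apply Rmult_1_l.
  - intro w. split.
    + intros H. split; [constructor|]. apply Forall_forall. intros j Hj. apply in_seq in Hj. apply H. lia.
    + intros [_ H] j Hj. rewrite Forall_forall in H. apply H, in_seq. lia.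
Qed.

Lemma Pr_count_event_div_le a l i r k : a <= l -> / 2 <= cdf l -> (1 <= k)%nat -> (k <= r)%nat ->
  Pr Ps (count_event a l (seq 1 i) r nil) / cdf l ^ i
    <= exp 1 ^ k * (2 * INR i * (cdf l - cdf a)) ^ k / INR r.
Proof.
  intros Hal Hq Hk Hkr.
  set (q := cdf l) in *. assert (Hqi : 0 < q ^ i) by (apply pow_lt; lra).
  assert (Hp : 0 <= q - cdf a) by (pose proof (cdf_le_mono a l Hal); unfold q; lra).
  assert (Hi : 0 <= INR i) by apply pos_INR.
  set (mu := INR i * ((q - cdf a) / q)).
  assert (Hmu : 0 <= mu).
  { apply Rmult_le_pos; [auto|apply Rmult_le_pos; [lra|left; apply Rinv_0_lt_compat; lra]]. }
  assert (HX1 : Pr Ps (count_event a l (seq 1 i) r nil) / q ^ i <= 1).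
  { apply (Rmult_le_reg_r (q ^ i)); [auto|]. unfold Rdiv.
    rewrite Rmult_assoc, Rinv_l, Rmult_1_l, Rmult_1_r by lra.
    replace (q ^ i) with (Pr Ps (fun w => in_box nil w /\ Forall (fun j => sigma j w <= (fun _ => l) j) (seq 1 i))).
    - apply Pr_le_mono; [apply meas_count_event|apply meas_in_box_le|]. intros w [_ [H1 H2]]. split; auto.
    - rewrite Pr_in_box_le, prodR_map_const, length_seq; [|constructor|apply seq_NoDup].
      apply Rmult_1_l. }
  assert (HX2 : Pr Ps (count_event a l (seq 1 i) r nil) / q ^ i <= mu ^ r / INR (fact r)).
  { apply (Rmult_le_reg_r (q ^ i)); [auto|]. unfold Rdiv at 1.
    rewrite Rmult_assoc, Rinv_l, Rmult_1_r by lra.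
    eapply Rle_trans; [apply Pr_count_event_le; [exact Hal|fold q; lra|constructor|apply seq_NoDup]|].
    rewrite Pr_in_box by constructor. rewrite length_seq. unfold mu. right.
    rewrite Rpow_mult_distr. fold q. unfold prodR, map, fold_right. field. apply Rgt_not_eq, INR_fact_lt_0. }
  eapply Rle_trans; [apply Rmin_glb; [exact HX1|exact HX2]|].
  eapply Rle_trans; [apply (Rmin_1_pow_div_fact_le mu r k Hk Hkr Hmu)|].
  unfold Rdiv. apply Rmult_le_compat_r; [left; apply Rinv_0_lt_compat, lt_0_INR; lia|].
  apply Rmult_le_compat_l; [apply pow_le; pose proof exp_pos 1; lra|].
  apply pow_incr. split; [auto|].
  unfold mu. replace (2 * INR i * (q - cdf a)) with (INR i * ((q - cdf a) * 2)) by ring.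
  apply Rmult_le_compat_l; auto. unfold Rdiv. apply Rmult_le_compat_l; auto.
  apply (Rmult_le_reg_r q); [lra|]. rewrite Rinv_l by lra. lra.
Qed.

Lemma S_ord_gt_count_event i k l d M (n : nat -> nat) w : 0 < l ->
  INR i * (l / 2 ^ M) + sumN (fun m => l / 2 ^ S m * INR (n m)) M <= l * d ->
  S_ord sigma i k w > l * d -> (forall j, (1 <= j <= i)%nat -> sigma j w <= l) ->
  exists m, (m < M)%nat /\ count_event (l / 2 ^ S m) l (seq 1 i) (k + n m) nil w.
Proof.
  intros Hl Hbudget HS Hall.
  assert (HFs : Forall (fun j => sigma j w <= l) (seq 1 i)).
  { apply Forall_forall. intros j Hj. apply in_seq in Hj. apply Hall. lia. }
  set (vals := map (fun j => sigma j w) (seq 1 i)).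
  assert (HFv : Forall (fun x => x <= l) vals).
  { apply Forall_forall. intros x Hx. apply in_map_iff in Hx. destruct Hx as [j [<- Hj]].
    rewrite Forall_forall in HFs. auto. }
  assert (Hlen : length vals = i) by (unfold vals; rewrite length_map, length_seq; reflexivity).
  destruct (count_gt_exceeds_of_lsum_skipn_gt vals l k M n Hl HFv) as [m [Hm Hc]].
  { rewrite Hlen. change (lsum (skipn (k - 1) (sort_desc vals))) with (S_ord sigma i k w). lra. }
  exists m. split; [auto|]. repeat split; auto. constructor.
Qed.

Lemma Pr_count_event_level_div_le i k l d m (nm : nat) : (1 <= k)%nat -> 0 < l -> 0 < d ->
  0 < tail_prob l <= / 2 -> d * (7 / 4) ^ m / 8 < INR nm + 1 ->
  Pr Ps (count_event (l / 2 ^ S m) l (seq 1 i) (k + nm) nil) / cdf l ^ i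
    <= 8 * exp 1 ^ k * (2 * INR i * tail_prob l) ^ k / d
       * ((tail_prob (l / 2 ^ S m) / tail_prob l - 1) ^ k / (7 / 4) ^ m).
Proof.
  intros Hk Hl Hd Htail Hnm.
  assert (Hq : / 2 <= cdf l) by (rewrite cdf_eq_1_minus_tail_prob; lra).
  assert (Hb : 0 < (7 / 4) ^ m) by (apply pow_lt; lra).
  assert (Ham : l / 2 ^ S m <= l).
  { unfold Rdiv. rewrite <- (Rmult_1_r l) at 2. apply Rmult_le_compat_l; [lra|].
    rewrite <- Rinv_1. apply Rinv_le_contravar; [lra|apply pow_R1_Rle; lra]. }
  eapply Rle_trans; [apply (Pr_count_event_div_le _ _ _ _ k Ham Hq Hk); lia|].
  assert (Hr : d * (7 / 4) ^ m / 8 < INR (k + nm)).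
  { rewrite plus_INR. assert (1 <= INR k) by (apply (le_INR 1); auto). lra. }
  assert (Hr0 : 0 < d * (7 / 4) ^ m / 8) by (apply Rdiv_lt_0_compat; [apply Rmult_lt_0_compat|]; lra).
  assert (Hinvr : / INR (k + nm) <= / (d * (7 / 4) ^ m / 8)) by (apply Rinv_le_contravar; lra).
  assert (Hp : 0 <= cdf l - cdf (l / 2 ^ S m)) by (pose proof (cdf_le_mono _ _ Ham); lra).
  assert (0 <= exp 1 ^ k * (2 * INR i * (cdf l - cdf (l / 2 ^ S m))) ^ k).
  { apply Rmult_le_pos; apply pow_le; [pose proof (exp_pos 1); lra|].
    apply Rmult_le_pos; [pose proof (pos_INR i); lra|auto]. }
  unfold Rdiv at 1. eapply Rle_trans; [apply Rmult_le_compat_l; eauto|].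
  replace (cdf l - cdf (l / 2 ^ S m)) with (tail_prob l * (tail_prob (l / 2 ^ S m) / tail_prob l - 1))
    by (rewrite !cdf_eq_1_minus_tail_prob; field; lra).
  right. rewrite !Rpow_mult_distr. field. lra.
Qed.

Lemma Pr_S_ord_gt_div_le i l d k : (1 <= k)%nat -> 0 < l -> 0 < d -> 0 < tail_prob l <= / 2 ->
  exists M,
    Pr Ps (fun w => S_ord sigma i k w > l * d /\ (forall j, (1 <= j <= i)%nat -> sigma j w <= l))
      / cdf l ^ i
    <= 8 * exp 1 ^ k * (2 * INR i * tail_prob l) ^ k / d
       * sumN (fun m => (tail_prob (l / 2 ^ S m) / tail_prob l - 1) ^ k / (7 / 4) ^ m) M.
Proof.
  intros Hk Hl Hd Htail.
  assert (Hqi : 0 < cdf l ^ i) by (apply pow_lt; rewrite cdf_eq_1_minus_tail_prob; lra).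
  destruct (exists_dyadic_depth i d l Hd Hl) as [M HM].
  destruct (dyadic_budget l d Hl Hd) as [n [Hn Hbudget]].
  specialize (Hbudget M). exists M.
  set (C := fun m => count_event (l / 2 ^ S m) l (seq 1 i) (k + n m) nil).
  assert (HmC : forall m, meas Ps (C m)) by (intro; apply meas_count_event).
  assert (HEm : meas Ps (fun w => S_ord sigma i k w > l * d /\ (forall j, (1 <= j <= i)%nat -> sigma j w <= l))).
  { apply meas_and; [apply rv_gt, S_ord_rv, Hrv|].
    eapply meas_ext; [|apply (meas_Forall Ps (fun j w => sigma j w <= l) (seq 1 i)); intros; apply Hrv].
    intro w. rewrite Forall_forall. split; intros H j Hj; apply H; [apply in_seq|apply in_seq in Hj]; lia. }
  unfold Rdiv at 1. eapply Rle_trans.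
  { apply Rmult_le_compat_r; [left; apply Rinv_0_lt_compat; auto|].
    eapply Rle_trans; [|apply (Pr_exists_lt_le Ps C M HmC)].
    apply Pr_le_mono; [auto|apply meas_exists_lt; auto|].
    intros w [HS Hall]. apply (S_ord_gt_count_event i k l d M n w Hl); auto. lra. }
  rewrite Rmult_comm, <- sumN_scal, <- sumN_scal.
  apply sumN_le. intros m _. rewrite Rmult_comm.
  apply Pr_count_event_level_div_le; auto.
Qed.

End Independence.

Lemma lim_infty_eventually_ext f g l U :
  (forall u, U <= u -> f u = g u) -> lim_infty f l -> lim_infty g l.
Proof.
  intros He H eps Heps. destruct (H eps Heps) as [M HM]. exists (Rmax M U). intros u Hu.
  rewrite <- He; [apply HM|]; eapply Rle_trans; [apply Rmax_l|exact Hu|apply Rmax_r|exact Hu].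
Qed.

Lemma lim_infty_plus f g a b :
  lim_infty f a -> lim_infty g b -> lim_infty (fun u => f u + g u) (a + b).
Proof.
  intros Hf Hg eps Heps. destruct (Hf (eps/2)) as [M1 H1]; [lra|]. destruct (Hg (eps/2)) as [M2 H2]; [lra|].
  exists (Rmax M1 M2). intros u Hu. specialize (H1 u (Rle_trans _ _ _ (Rmax_l _ _) Hu)).
  specialize (H2 u (Rle_trans _ _ _ (Rmax_r _ _) Hu)).
  replace (f u + g u - (a + b)) with ((f u - a) + (g u - b)) by ring.
  eapply Rle_lt_trans; [apply Rabs_triang|]. lra.
Qed.

Lemma lim_infty_opp f a : lim_infty f a -> lim_infty (fun u => - f u) (- a).
Proof.
  intros Hf eps Heps. destruct (Hf eps Heps) as [M HM]. exists M. intros u Hu.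
  replace (- f u - - a) with (- (f u - a)) by ring. rewrite Rabs_Ropp; auto.
Qed.

Lemma lim_infty_bounded f a : lim_infty f a -> exists M B, forall u, M <= u -> Rabs (f u) <= B.
Proof.
  intros Hf. destruct (Hf 1) as [M HM]; [lra|]. exists M, (Rabs a + 1). intros u Hu.
  specialize (HM u Hu). replace (f u) with ((f u - a) + a) by ring.
  eapply Rle_trans; [apply Rabs_triang|]. lra.
Qed.

Lemma lim_infty_mult f g a b :
  lim_infty f a -> lim_infty g b -> lim_infty (fun u => f u * g u) (a * b).
Proof.
  intros Hf Hg eps Heps.
  destruct (lim_infty_bounded f a Hf) as [M0 [B HB]].
  set (B' := Rabs B + Rabs b + 1).
  assert (HB' : Rabs B + Rabs b + 1 <= B') by (unfold B'; lra).
  assert (HB0 : 0 < B') by (pose proof (Rabs_pos B); pose proof (Rabs_pos b); lra).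
  clearbody B'.
  destruct (Hf (eps / (4 * B'))) as [M1 H1]; [apply Rdiv_lt_0_compat; lra|].
  destruct (Hg (eps / (4 * B'))) as [M2 H2]; [apply Rdiv_lt_0_compat; lra|].
  exists (Rmax M0 (Rmax M1 M2)). intros u Hu.
  pose proof (Rmax_l M0 (Rmax M1 M2)). pose proof (Rmax_r M0 (Rmax M1 M2)).
  pose proof (Rmax_l M1 M2). pose proof (Rmax_r M1 M2).
  specialize (HB u ltac:(lra)). specialize (H1 u ltac:(lra)). specialize (H2 u ltac:(lra)).
  replace (f u * g u - a * b) with (f u * (g u - b) + (f u - a) * b) by ring.
  eapply Rle_lt_trans; [apply Rabs_triang|]. rewrite !Rabs_mult.
  assert (Rabs (f u) <= B') by (pose proof (Rle_abs B); pose proof (Rabs_pos b); lra).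
  assert (Rabs b <= B') by (pose proof (Rabs_pos B); lra).
  assert (Rabs (f u) * Rabs (g u - b) <= B' * (eps / (4 * B')))
    by (apply Rmult_le_compat; auto using Rabs_pos; lra).
  assert (Rabs (f u - a) * Rabs b <= (eps / (4 * B')) * B')
    by (apply Rmult_le_compat; auto using Rabs_pos; lra).
  assert (E : B' * (eps / (4 * B')) + eps / (4 * B') * B' = eps / 2) by (field; lra).
  lra.
Qed.

Lemma lim_infty_inv f a : a <> 0 -> lim_infty f a -> lim_infty (fun u => / f u) (/ a).
Proof.
  intros Ha Hf eps Heps.
  set (d := Rabs a). assert (Hd : 0 < d) by (apply Rabs_pos_lt; auto).
  destruct (Hf (Rmin (d / 2) (eps * d * d / 2))) as [M HM].
  { apply Rmin_glb_lt; [lra|]. apply Rdiv_lt_0_compat; [|lra].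
    apply Rmult_lt_0_compat; [apply Rmult_lt_0_compat|]; lra. }
  exists M. intros u Hu. specialize (HM u Hu).
  assert (H1 : Rabs (f u - a) < d / 2) by (eapply Rlt_le_trans; [exact HM|apply Rmin_l]).
  assert (H2 : Rabs (f u - a) < eps * d * d / 2) by (eapply Rlt_le_trans; [exact HM|apply Rmin_r]).
  assert (Hfu : d / 2 <= Rabs (f u)).
  { pose proof (Rabs_triang_inv a (a - f u)) as H. replace (a - (a - f u)) with (f u) in H by ring.
    rewrite Rabs_minus_sym in H1. fold d in H. lra. }
  assert (Hf0 : f u <> 0) by (intro E; rewrite E, Rabs_R0 in Hfu; lra).
  replace (/ f u - / a) with ((a - f u) / (f u * a)) by (field; auto).
  unfold Rdiv. rewrite Rabs_mult, Rabs_inv, Rabs_mult, Rabs_minus_sym. fold d.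
  apply Rle_lt_trans with (Rabs (f u - a) * / (d / 2 * d)).
  - apply Rmult_le_compat_l; [apply Rabs_pos|].
    apply Rinv_le_contravar; [apply Rmult_lt_0_compat; lra|apply Rmult_le_compat_r; lra].
  - apply (Rmult_lt_reg_r (d / 2 * d)); [apply Rmult_lt_0_compat; lra|].
    rewrite Rmult_assoc, Rinv_l, Rmult_1_r by (apply Rgt_not_eq, Rmult_lt_0_compat; lra).
    replace (eps * (d / 2 * d)) with (eps * d * d / 2) by field. exact H2.
Qed.

Lemma lim_infty_half f a : lim_infty f a -> lim_infty (fun u => f (u / 2)) a.
Proof.
  intros Hf eps Heps. destruct (Hf eps Heps) as [M HM]. exists (2 * Rabs M). intros u Hu.
  apply HM. pose proof (Rle_abs M). pose proof (Rabs_pos M). lra.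
Qed.

Definition dyadic_regular (F g : R -> R) (rho C U0 : R) : Prop :=
  forall u, U0 <= u ->
    0 < g u /\ F (u / 2) / F u <= 1 + C * g u /\ C * g u <= rho - 1 /\ g (u / 2) <= rho * g u.

Section DyadicChains.

Variables (F g : R -> R) (rho C U0 : R).
Hypothesis HF : forall u, 0 < F u.
Hypothesis Hrho : 1 <= rho.
Hypothesis Hreg : dyadic_regular F g rho C U0.

Lemma dyadic_chain_below (l : R) : 0 < C -> 0 < l ->
  forall n, (forall r, (r < n)%nat -> U0 <= l / 2 ^ r) ->
    g (l / 2 ^ n) <= rho ^ n * g l /\
    F (l / 2 ^ n) / F l <= rho ^ n /\ F (l / 2 ^ n) / F l <= 1 + INR n * C * g l * rho ^ (2 * n).
Proof.
  intros HC Hl. induction n; intros Hr.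
  - simpl. unfold Rdiv. rewrite Rinv_1, Rmult_1_r, Rinv_r by (apply Rgt_not_eq, HF). lra.
  - destruct IHn as [Hg [HX1 HX2]]; [intros; apply Hr; lia|].
    set (un := l / 2 ^ n) in *.
    assert (Hun : U0 <= un) by (apply Hr; lia).
    destruct (Hreg un Hun) as [Hgp [Hrat [Hc Hgg]]].
    assert (E : l / 2 ^ S n = un / 2) by (unfold un; simpl; field; apply pow_nonzero; lra).
    rewrite E.
    assert (Hgl : 0 < g l).
    { destruct n; [unfold un in Hgp; simpl in Hgp; unfold Rdiv in Hgp; rewrite Rinv_1, Rmult_1_r in Hgp; auto|].
      assert (0 < rho ^ S n) by (apply pow_lt; lra). nra. }
    pose proof (HF un) as Fun. pose proof (HF (un / 2)) as Fun2. pose proof (HF l) as Fl.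
    assert (Hpn : 0 < rho ^ n) by (apply pow_lt; lra).
    set (X := F un / F l) in *. set (a := C * g un) in *.
    assert (Ha0 : 0 <= a) by (unfold a; nra).
    assert (Ha1 : a <= C * rho ^ n * g l) by (unfold a; rewrite Rmult_assoc; apply Rmult_le_compat_l; lra).
    assert (EX : F (un / 2) / F l = X * (F (un / 2) / F un)) by (unfold X; field; split; lra).
    assert (HX0 : 0 <= X) by (unfold X; apply Rmult_le_pos; [lra|left; apply Rinv_0_lt_compat; lra]).
    assert (Hq0 : 0 <= F (un / 2) / F un) by (apply Rmult_le_pos; [lra|left; apply Rinv_0_lt_compat; lra]).
    rewrite EX. split; [|split].
    + simpl. nra.
    + simpl. assert (X * (F (un / 2) / F un) <= rho ^ n * (1 + a)) by (apply Rmult_le_compat; lra). nra.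
    + rewrite S_INR.
      assert (H1 : X * (F (un / 2) / F un) <= X * (1 + a)) by (apply Rmult_le_compat_l; lra).
      assert (H2 : X * a <= rho ^ n * (C * rho ^ n * g l)) by (apply Rmult_le_compat; lra).
      assert (H3 : rho ^ (2 * n) <= rho ^ (2 * S n)) by (apply Rle_pow; lia || auto).
      assert (E2 : rho ^ n * (C * rho ^ n * g l) = C * g l * rho ^ (2 * n))
        by (replace (2 * n)%nat with (n + n)%nat by lia; rewrite pow_add; ring).
      assert (0 <= C * g l) by nra. assert (0 <= INR n) by apply pos_INR.
      assert (INR n * C * g l * rho ^ (2 * n) <= INR n * C * g l * rho ^ (2 * S n)).
      { rewrite !(Rmult_assoc (INR n)). apply Rmult_le_compat_l; auto. apply Rmult_le_compat_l; auto. }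
      assert (C * g l * rho ^ (2 * n) <= C * g l * rho ^ (2 * S n)) by (apply Rmult_le_compat_l; auto).
      nra.
Qed.

Hypothesis HFmon : forall x y, x <= y -> F y <= F x.
Hypothesis Hgmon : forall u v, U0 <= u -> u <= v -> g v <= g u.

Lemma dyadic_chain_above : 0 < U0 ->
  forall n u, U0 <= u -> u <= 2 ^ n * (2 * U0) ->
    F (2 * U0) <= rho ^ n * F u /\ g (2 * U0) <= rho ^ n * g u.
Proof.
  intros HU0. induction n; intros u Hu1 Hu2.
  - simpl in *. rewrite !Rmult_1_l in *. split; [apply HFmon|apply Hgmon]; lra.
  - destruct (Rle_dec u (2 ^ n * (2 * U0))) as [Hle|Hgt].
    + destruct (IHn u Hu1 Hle) as [H1 H2]. destruct (Hreg u Hu1) as [Hg _].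
      assert (rho ^ n <= rho ^ S n) by (apply Rle_pow; auto).
      pose proof (HF u). split; nra.
    + assert (Hp : 1 <= 2 ^ n) by (apply pow_R1_Rle; lra).
      assert (Hu3 : U0 <= u / 2) by (assert (2 * U0 <= 2 ^ n * (2 * U0)) by nra; lra).
      assert (Hu4 : u / 2 <= 2 ^ n * (2 * U0)) by (simpl in Hu2; lra).
      destruct (IHn (u / 2) Hu3 Hu4) as [H1 H2].
      destruct (Hreg u ltac:(lra)) as [Hg [Hr [Hc Hgg]]].
      pose proof (HF u) as Fu. pose proof (HF (u / 2)) as Fu2.
      assert (Hr' : F (u / 2) <= rho * F u).
      { apply (Rmult_le_compat_r (F u)) in Hr; [|lra]. unfold Rdiv in Hr.
        rewrite Rmult_assoc, Rinv_l, Rmult_1_r in Hr by lra. nra. }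
      assert (0 < rho ^ n) by (apply pow_lt; lra).
      simpl. split; nra.
Qed.

Lemma dyadic_ratio_le_shallow l m : 1 < rho -> 0 < C -> 0 < l -> U0 <= l / 2 ^ m ->
  F (l / 2 ^ S m) / F l - 1 <= C / (rho - 1) * g l * rho ^ (3 * S m).
Proof.
  intros Hrho1 HC Hl Hshallow.
  assert (Hr : forall r, (r < S m)%nat -> U0 <= l / 2 ^ r).
  { intros r Hr. eapply Rle_trans; [exact Hshallow|]. unfold Rdiv.
    apply Rmult_le_compat_l; [lra|]. apply Rinv_le_contravar; [apply pow_lt; lra|].
    apply Rle_pow; [lra|lia]. }
  destruct (dyadic_chain_below l HC Hl (S m) Hr) as [_ [_ HX]].
  assert (Hgl : 0 < g l).
  { destruct (Hreg (l / 2 ^ 0) (Hr 0%nat ltac:(lia))) as [H _].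
    simpl in H. unfold Rdiv in H. rewrite Rinv_1, Rmult_1_r in H. exact H. }
  assert (Hn : INR (S m) <= rho ^ S m / (rho - 1)).
  { pose proof (poly (S m) (rho - 1) ltac:(lra)) as Hb. replace (1 + (rho - 1)) with rho in Hb by ring.
    apply (Rmult_le_reg_r (rho - 1)); [lra|]. unfold Rdiv.
    rewrite Rmult_assoc, Rinv_l, Rmult_1_r by lra. lra. }
  assert (E : rho ^ (3 * S m) = rho ^ S m * rho ^ (2 * S m)) by (rewrite <- pow_add; f_equal; lia).
  rewrite E. assert (0 <= C * g l * rho ^ (2 * S m)) by (apply Rmult_le_pos; [nra|apply pow_le; lra]).
  assert (INR (S m) * (C * g l * rho ^ (2 * S m)) <= rho ^ S m / (rho - 1) * (C * g l * rho ^ (2 * S m)))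
    by (apply Rmult_le_compat_r; auto).
  replace (C / (rho - 1) * g l * (rho ^ S m * rho ^ (2 * S m)))
    with (rho ^ S m / (rho - 1) * (C * g l * rho ^ (2 * S m))) by (field; lra).
  lra.
Qed.

Hypothesis HF1 : forall u, F u <= 1.

Lemma dyadic_ratio_le_deep l m : 0 < U0 -> 2 * U0 <= l -> l / 2 ^ m < U0 ->
  F (l / 2 ^ S m) / F l - 1 <= / (F (2 * U0) * g (2 * U0)) * g l * rho ^ (3 * S m).
Proof.
  intros HU0 Hl Hdeep.
  assert (H2m : 0 < 2 ^ m) by (apply pow_lt; lra).
  assert (Hpow : forall n, 1 <= rho ^ n) by (intro; apply pow_R1_Rle; lra).
  assert (HG0 : 0 < g (2 * U0)) by (apply Hreg; lra).
  assert (Hgl : 0 < g l) by (apply Hreg; lra).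
  assert (Hlu : l <= 2 ^ m * (2 * U0)).
  { apply (Rmult_lt_compat_r (2 ^ m)) in Hdeep; auto. unfold Rdiv in Hdeep.
    rewrite Rmult_assoc, Rinv_l, Rmult_1_r in Hdeep by lra. nra. }
  destruct (dyadic_chain_above HU0 m l ltac:(lra) Hlu) as [D1 D2].
  pose proof (HF l). pose proof (HF (2 * U0)). pose proof (HF1 (l / 2 ^ S m)).
  assert (Hpm : 0 < rho ^ m) by (specialize (Hpow m); lra).
  assert (HXb : F (l / 2 ^ S m) / F l <= / F l).
  { unfold Rdiv. rewrite <- (Rmult_1_l (/ F l)) at 2.
    apply Rmult_le_compat_r; [left; apply Rinv_0_lt_compat|]; lra. }
  assert (Hinv : / F l <= rho ^ m * / F (2 * U0)).
  { apply (Rmult_le_reg_r (F l * F (2 * U0))); [nra|].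
    replace (/ F l * (F l * F (2 * U0))) with (F (2 * U0)) by (field; lra).
    replace (rho ^ m * / F (2 * U0) * (F l * F (2 * U0))) with (rho ^ m * F l) by (field; lra). lra. }
  assert (Hg1 : 1 <= rho ^ m * g l * / g (2 * U0)).
  { apply (Rmult_le_reg_r (g (2 * U0))); auto. rewrite Rmult_assoc, Rinv_l, Rmult_1_r by lra. lra. }
  assert (E : / (F (2 * U0) * g (2 * U0)) * g l * rho ^ (2 * m)
              = (rho ^ m * / F (2 * U0)) * (rho ^ m * g l * / g (2 * U0))).
  { replace (2 * m)%nat with (m + m)%nat by lia. rewrite pow_add. field. split; lra. }
  assert (0 <= rho ^ m * / F (2 * U0)) by (apply Rmult_le_pos; [lra|left; apply Rinv_0_lt_compat; lra]).
  assert (rho ^ m * / F (2 * U0) * 1 <= rho ^ m * / F (2 * U0) * (rho ^ m * g l * / g (2 * U0)))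
    by (apply Rmult_le_compat_l; auto).
  assert (/ (F (2 * U0) * g (2 * U0)) * g l * rho ^ (2 * m)
          <= / (F (2 * U0) * g (2 * U0)) * g l * rho ^ (3 * S m)).
  { apply Rmult_le_compat_l; [|apply Rle_pow; [lra|lia]].
    apply Rmult_le_pos; [left; apply Rinv_0_lt_compat, Rmult_lt_0_compat|]; lra. }
  lra.
Qed.

(* Far from U0 the chain of one-step bounds F(u/2)/F(u) <= 1 + C g(u) is used; once l/2^m drops
   below U0, the crude bounds F(l) >= F(2 U0)/rho^m and g(l) >= g(2 U0)/rho^m take over. *)
Lemma dyadic_ratio_le : 1 < rho -> 0 < C -> 0 < U0 ->
  exists K, 0 < K /\ forall l m, 2 * U0 <= l ->
    F (l / 2 ^ S m) / F l - 1 <= K * g l * rho ^ (3 * S m).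
Proof.
  intros Hrho1 HC HU0.
  set (K1 := / (F (2 * U0) * g (2 * U0))).
  assert (HK1 : 0 < K1).
  { apply Rinv_0_lt_compat, Rmult_lt_0_compat; [apply HF|apply Hreg; lra]. }
  assert (HCr : 0 < C / (rho - 1)) by (apply Rdiv_lt_0_compat; lra).
  exists (C / (rho - 1) + K1). split; [lra|]. intros l m Hl.
  assert (Hgl : 0 < g l) by (apply Hreg; lra).
  assert (Hm3 : 0 < rho ^ (3 * S m)) by (apply pow_lt; lra).
  assert (0 < K1 * g l * rho ^ (3 * S m)) by (apply Rmult_lt_0_compat; [apply Rmult_lt_0_compat|]; auto).
  assert (0 < C / (rho - 1) * g l * rho ^ (3 * S m)) by (apply Rmult_lt_0_compat; [apply Rmult_lt_0_compat|]; auto).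
  destruct (Rle_dec U0 (l / 2 ^ m)) as [Hshallow|Hdeep].
  - pose proof (dyadic_ratio_le_shallow l m Hrho1 HC ltac:(lra) Hshallow). nra.
  - pose proof (dyadic_ratio_le_deep l m HU0 Hl (Rnot_le_lt _ _ Hdeep)) as Hd. fold K1 in Hd. nra.
Qed.

End DyadicChains.

Lemma exists_gt_1_pow_lt_7_4 n : exists rho, 1 < rho /\ rho ^ n < 7 / 4.
Proof.
  set (y := / (2 * INR (S n))).
  assert (HS : 0 < INR (S n)) by (apply lt_0_INR; lia).
  assert (Hy : 0 < y) by (apply Rinv_0_lt_compat; lra).
  exists (1 + y). split; [lra|].
  apply Rle_lt_trans with (exp y ^ n); [apply pow_incr; split; [lra|apply exp_ineq1_le]|].
  rewrite exp_pow.
  assert (Hle : INR n * y <= / 2).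
  { unfold y. rewrite S_INR in *. apply (Rmult_le_reg_r (2 * (INR n + 1))); [lra|].
    field_simplify; lra. }
  assert (E : exp (/ 2) * exp (/ 2) = exp 1) by (rewrite <- exp_plus; f_equal; lra).
  assert (exp (INR n * y) <= exp (/ 2)).
  { destruct (Req_dec (INR n * y) (/ 2)) as [Eq|Ne]; [rewrite Eq; lra|left; apply exp_increasing; lra]. }
  pose proof exp_le_3. pose proof (exp_pos (/ 2)). nra.
Qed.

Lemma pos_seq_lower_bound (f b : nat -> R) (B : R) :
  (forall n, 0 < f n) -> (forall n, f n <= f (S n) * (1 + b n)) -> (forall n, sumN b n <= B) ->
  forall n, f 0%nat * exp (- B) <= f n.
Proof.
  intros Hf Hstep HB.
  assert (H : forall n, f 0%nat <= f n * exp (sumN b n)).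
  { induction n as [|n IH]; simpl; [rewrite exp_0; lra|].
    rewrite exp_plus. eapply Rle_trans; [exact IH|].
    pose proof (exp_pos (sumN b n)). pose proof (Hf (S n)).
    assert (f n <= f (S n) * exp (b n)).
    { eapply Rle_trans; [apply Hstep|]. apply Rmult_le_compat_l; [lra|apply exp_ineq1_le]. }
    nra. }
  intro n. specialize (H n).
  assert (exp (sumN b n) * exp (- B) <= 1).
  { rewrite <- exp_plus, <- exp_0. destruct (Req_dec (sumN b n + - B) 0) as [E|E]; [rewrite E; lra|].
    left. apply exp_increasing. specialize (HB n). lra. }
  pose proof (exp_pos (- B)). pose proof (Hf n). nra.
Qed.

Lemma doubling_lower_bound (F g : R -> R) (C th U1 : R) :
  (forall u, 0 < F u) -> 0 <= C -> 0 < th < 1 -> 0 < U1 -> 0 <= g U1 ->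
  (forall u, U1 <= u -> g (2 * u) <= th * g u /\ F u / F (2 * u) <= 1 + C * g (2 * u)) ->
  exists c, 0 < c /\ forall n, c <= F (2 ^ n * U1).
Proof.
  intros HF HC Hth HU1 HgU1 Hdouble.
  set (u := fun n => 2 ^ n * U1).
  assert (Hu : forall n, U1 <= u n) by (intro n; unfold u; pose proof (pow_R1_Rle 2 n ltac:(lra)); nra).
  assert (Hu2 : forall n, u (S n) = 2 * u n) by (intro; unfold u; simpl; ring).
  assert (Hg : forall n, g (u n) <= g U1 * th ^ n).
  { induction n; [unfold u; simpl; rewrite Rmult_1_l; lra|].
    rewrite Hu2. destruct (Hdouble _ (Hu n)) as [H _]. simpl. nra. }
  set (B := C * g U1 / (1 - th)).
  exists (F U1 * exp (- B)). split; [apply Rmult_lt_0_compat; [apply HF|apply exp_pos]|].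
  replace (F U1) with (F (u 0%nat)) by (unfold u; simpl; f_equal; ring).
  apply (pos_seq_lower_bound (fun n => F (u n)) (fun n => C * g U1 * th ^ S n)).
  - intro; apply HF.
  - intro n. destruct (Hdouble _ (Hu n)) as [_ H]. rewrite <- Hu2 in H.
    pose proof (HF (u n)). pose proof (HF (u (S n))).
    assert (H2 : F (u n) <= F (u (S n)) * (1 + C * g (u (S n)))).
    { apply (Rmult_le_reg_r (/ F (u (S n)))); [apply Rinv_0_lt_compat; lra|].
      replace (F (u (S n)) * (1 + C * g (u (S n))) * / F (u (S n)))
        with (1 + C * g (u (S n))) by (field; lra). exact H. }
    eapply Rle_trans; [exact H2|]. apply Rmult_le_compat_l; [lra|].
    pose proof (Hg (S n)). rewrite Rmult_assoc. apply Rplus_le_compat_l, Rmult_le_compat_l; auto.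
  - intro n. rewrite (sumN_scal (C * g U1) (fun n => th ^ S n)).
    unfold B, Rdiv. apply Rmult_le_compat_l; [apply Rmult_le_pos; auto|].
    eapply Rle_trans; [|apply (sumN_geometric_le th n ltac:(lra))].
    apply sumN_le. intros m _. simpl. pose proof (pow_le th m ltac:(lra)). nra.
Qed.

Section AssumptionA.

Variables F g kf : R -> R.
Hypothesis HF : forall u, 0 < F u.
Hypothesis HA : AssumptionA (fun u => / F u) g kf.

(* g decreases to 0, so it is eventually nonnegative; it cannot vanish eventually since the
   limit k(v) is nonzero for some v. *)
Lemma g_eventually_pos :
  exists M, (forall u, M <= u -> 0 < g u) /\ (forall u v, M <= u -> u <= v -> g v <= g u).
Proof.
  destruct HA as [_ [Hg0 [[M Hmono] [Hlim [w0 [Hw0 [Hk _]]]]]]].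
  exists M. assert (Hnn : forall u, M <= u -> 0 <= g u).
  { intros u Hu. apply Rnot_lt_le. intro Hlt. destruct (Hg0 (- g u)) as [N HN]; [lra|].
    specialize (HN (Rmax u N) (Rmax_r _ _)). specialize (Hmono u (Rmax u N) Hu (Rmax_l _ _)).
    rewrite Rminus_0_r in HN. pose proof (Rle_abs (- g (Rmax u N))) as H. rewrite Rabs_Ropp in H. lra. }
  split; auto.
  intros u Hu. destruct (Rle_lt_or_eq_dec 0 (g u) (Hnn u Hu)) as [H|H]; auto. exfalso.
  assert (Hz : forall v, u <= v -> g v = 0).
  { intros v Hv. pose proof (Hmono u v Hu Hv). pose proof (Hnn v (Rle_trans _ _ _ Hu Hv)). lra. }
  destruct (Hlim w0 Hw0 (Rabs (kf w0))) as [N HN]; [apply Rabs_pos_lt; auto|].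
  specialize (HN (Rmax u N) (Rmax_r _ _)). rewrite (Hz (Rmax u N) (Rmax_l _ _)) in HN.
  rewrite Rdiv_0_r, Rminus_0_l, Rabs_Ropp in HN. lra.
Qed.

Lemma tail_half_ratio_le :
  exists C M, 0 < C /\
    forall u, M <= u -> 0 < g u /\ F (u / 2) / F u <= 1 + C * g u /\ C * g u <= 1.
Proof.
  destruct g_eventually_pos as [M1 [Hgp _]].
  pose proof HA as [_ [Hg0 [_ [Hlim _]]]].
  set (kap := kf (/ 2)). set (C0 := Rabs kap + 1).
  assert (HC0 : 0 < C0) by (unfold C0; pose proof (Rabs_pos kap); lra).
  destruct (Hlim (/ 2) ltac:(lra) 1 ltac:(lra)) as [Ma HMa].
  destruct (Hg0 (/ (2 * C0))) as [Mg HMg]; [apply Rinv_0_lt_compat; lra|].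
  exists (2 * C0), (Rmax M1 (Rmax Ma Mg)). split; [lra|]. intros u Hu.
  pose proof (Rmax_l M1 (Rmax Ma Mg)). pose proof (Rmax_r M1 (Rmax Ma Mg)).
  pose proof (Rmax_l Ma Mg). pose proof (Rmax_r Ma Mg).
  specialize (Hgp u ltac:(lra)). specialize (HMa u ltac:(lra)). specialize (HMg u ltac:(lra)).
  rewrite Rminus_0_r, Rabs_right in HMg by lra.
  assert (HCg : C0 * g u < / 2).
  { assert (E : C0 * / (2 * C0) = / 2) by (field; lra). apply (Rmult_lt_compat_l C0) in HMg; auto. lra. }
  split; auto.
  set (A := F u) in *. set (B := F (u / 2)) in *.
  assert (HA0 : 0 < A) by apply HF. assert (HB0 : 0 < B) by apply HF.
  change (u * / 2) with (u / 2) in HMa. fold B in HMa.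
  replace (/ B / / A) with (A / B) in HMa by (field; split; lra).
  fold kap in HMa.
  assert (Ht : (A / B - 1) / g u > kap - 1) by (pose proof (Rabs_def2 _ _ HMa) as [_ Hlo]; lra).
  assert (Ht2 : A / B - 1 > (kap - 1) * g u).
  { apply (Rmult_gt_compat_r (g u)) in Ht; auto. unfold Rdiv at 1 in Ht.
    rewrite Rmult_assoc, Rinv_l in Ht by lra. lra. }
  assert (Hk : kap - 1 >= - C0) by (unfold C0; pose proof (Rle_abs (- kap)) as Habs; rewrite Rabs_Ropp in Habs; lra).
  assert (Ht3 : A / B > 1 - C0 * g u) by nra.
  assert (HAB : A > (1 - C0 * g u) * B).
  { apply (Rmult_gt_compat_r B) in Ht3; auto. unfold Rdiv in Ht3.
    rewrite Rmult_assoc, Rinv_l in Ht3 by lra. lra. }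
  split; [|lra].
  apply (Rmult_le_reg_r A); auto. unfold Rdiv. rewrite Rmult_assoc, Rinv_l, Rmult_1_r by lra.
  set (y := C0 * g u) in *. assert (0 <= y) by (unfold y; nra).
  replace (2 * C0 * g u) with (2 * y) by (unfold y; ring).
  assert (E1 : 0 <= B * (y * (1 - 2 * y))) by (apply Rmult_le_pos; [|apply Rmult_le_pos]; lra).
  assert (E2 : (1 + 2 * y) * ((1 - y) * B) <= (1 + 2 * y) * A) by (apply Rmult_le_compat_l; lra).
  lra.
Qed.

Hypothesis Hsv : forall v, 0 < v -> lim_infty (fun u => / F (u * v) / / F u) 1.

(* With R(u) = L(u/2)/L(u), divide
     L(u w0/2)/L(u) - 1 = R(u) (L(u/2 w0)/L(u/2) - 1) + (R(u) - 1)
   by g(u): as u -> oo this reads k(w0/2) = lim [g(u/2)/g(u)] k(w0) + k(1/2). *)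
Lemma g_half_ratio_cvg : exists psi, lim_infty (fun u => g (u / 2) / g u) psi.
Proof.
  set (L := fun u => / F u).
  assert (HL : forall u, 0 < L u) by (intro; apply Rinv_0_lt_compat, HF).
  destruct g_eventually_pos as [M1 [Hgp _]].
  pose proof HA as [_ [_ [_ [Hlim [w0 [Hw0 [Hk _]]]]]]].
  set (A1 := fun u => (L (u * (w0 / 2)) / L u - 1) / g u).
  set (A2 := fun u => (L (u * / 2) / L u - 1) / g u).
  set (A3 := fun u => (L (u / 2 * w0) / L (u / 2) - 1) / g (u / 2)).
  set (R := fun u => L (u * / 2) / L u).
  assert (H1 : lim_infty A1 (kf (w0 / 2))) by (apply Hlim; lra).
  assert (H2 : lim_infty A2 (kf (/ 2))) by (apply Hlim; lra).
  assert (H3 : lim_infty A3 (kf w0))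
    by (apply (lim_infty_half (fun u => (L (u * w0) / L u - 1) / g u)); apply Hlim; lra).
  assert (H4 : lim_infty R 1) by (apply Hsv; lra).
  assert (H34 : lim_infty (fun u => A3 u * R u) (kf w0 * 1)) by (apply lim_infty_mult; auto).
  exists ((kf (w0 / 2) + - kf (/ 2)) * / (kf w0 * 1)).
  destruct (H34 (Rabs (kf w0))) as [M3 HM3]; [apply Rabs_pos_lt; auto|].
  apply (lim_infty_eventually_ext (fun u => (A1 u + - A2 u) * / (A3 u * R u)) _ _
           (Rmax (Rmax M1 (2 * M1)) M3)).
  - intros u Hu.
    pose proof (Rmax_l (Rmax M1 (2 * M1)) M3). pose proof (Rmax_r (Rmax M1 (2 * M1)) M3).
    pose proof (Rmax_l M1 (2 * M1)). pose proof (Rmax_r M1 (2 * M1)).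
    specialize (HM3 u ltac:(lra)). rewrite Rmult_1_r in HM3.
    assert (HAR : A3 u * R u <> 0) by (intro E; rewrite E, Rminus_0_l, Rabs_Ropp in HM3; lra).
    assert (g1 : 0 < g u) by (apply Hgp; lra). assert (g2 : 0 < g (u / 2)) by (apply Hgp; lra).
    unfold A1, A2, A3, R in *.
    replace (u * (w0 / 2)) with (u / 2 * w0) by (unfold Rdiv; ring).
    change (u * / 2) with (u / 2) in *.
    pose proof (HL u). pose proof (HL (u / 2)). pose proof (HL (u / 2 * w0)).
    assert (Hcb : L (u / 2 * w0) - L (u / 2) <> 0).
    { intro E. apply HAR. replace (L (u / 2 * w0)) with (L (u / 2)) by lra.
      unfold Rdiv at 2. rewrite Rinv_r by lra. unfold Rdiv at 1.
      rewrite Rminus_diag, !Rmult_0_l. reflexivity. }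
    field. repeat split; lra.
  - apply lim_infty_mult; [apply lim_infty_plus; auto; apply lim_infty_opp; auto|].
    apply lim_infty_inv; [rewrite Rmult_1_r; auto|auto].
Qed.

Hypothesis HF_to_0 : forall eps, 0 < eps -> exists U, forall u, U <= u -> F u < eps.

(* If psi > 1, g decays geometrically along 2^n U1, so F stays away from 0 there. *)
Lemma g_half_ratio_limit_le_1 psi C M :
  lim_infty (fun u => g (u / 2) / g u) psi -> 0 <= C ->
  (forall u, M <= u -> 0 < g u /\ F (u / 2) / F u <= 1 + C * g u) -> psi <= 1.
Proof.
  intros Hpsi HC HM. apply Rnot_lt_le. intro Hgt.
  set (p := (1 + psi) / 2).
  assert (Hth : 0 < / p < 1).
  { split; [apply Rinv_0_lt_compat; unfold p; lra|].
    rewrite <- Rinv_1. apply Rinv_lt_contravar; unfold p; lra. }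
  destruct (Hpsi ((psi - 1) / 2)) as [Mp HMp]; [lra|].
  set (U1 := Rmax (Rmax Mp M) 1).
  assert (HU1 : forall u, U1 <= u -> Mp <= u /\ M <= u /\ 1 <= u).
  { intros u Hu. pose proof (Rmax_l (Rmax Mp M) 1). pose proof (Rmax_r (Rmax Mp M) 1).
    pose proof (Rmax_l Mp M). pose proof (Rmax_r Mp M). unfold U1 in Hu. lra. }
  assert (Hdouble : forall u, U1 <= u -> g (2 * u) <= / p * g u /\ F u / F (2 * u) <= 1 + C * g (2 * u)).
  { intros u Hu. destruct (HU1 u Hu) as [_ [_ H1]]. destruct (HU1 (2 * u)) as [H2 [H3 _]]; [lra|].
    specialize (HMp _ H2). destruct (HM _ H3) as [Hg Hr].
    replace (2 * u / 2) with u in HMp, Hr by field. split; auto.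
    pose proof (Rabs_def2 _ _ HMp) as [_ Hr2].
    assert (Hlt : g u / g (2 * u) > p) by (unfold p; lra).
    apply (Rmult_lt_compat_r (g (2 * u))) in Hlt; auto. unfold Rdiv in Hlt.
    rewrite Rmult_assoc, Rinv_l in Hlt by lra.
    apply (Rmult_le_reg_l p); [unfold p; lra|].
    rewrite <- Rmult_assoc, Rinv_r, Rmult_1_l by (unfold p; lra). lra. }
  destruct (HU1 U1 (Rle_refl _)) as [_ [HMU1 HU11]].
  destruct (doubling_lower_bound F g C (/ p) U1 HF HC Hth ltac:(lra)
              (Rlt_le _ _ (proj1 (HM U1 HMU1))) Hdouble) as [c [Hc Hlow]].
  destruct (HF_to_0 c Hc) as [U HU].
  destruct (INR_unbounded (U / U1)) as [n Hn].
  assert (HUn : U <= 2 ^ n * U1).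
  { apply (Rmult_lt_compat_r U1) in Hn; [|lra]. unfold Rdiv in Hn.
    rewrite Rmult_assoc, Rinv_l, Rmult_1_r in Hn by lra.
    pose proof (INR_le_pow2 n). nra. }
  specialize (HU _ HUn). specialize (Hlow n). lra.
Qed.

Lemma g_half_ratio_eventually_le rho : 1 < rho ->
  exists M, forall u, M <= u -> g (u / 2) <= rho * g u.
Proof.
  intros Hrho.
  destruct g_half_ratio_cvg as [psi Hpsi].
  destruct tail_half_ratio_le as [C [M2 [HC HM2]]].
  assert (Hpsi1 : psi <= 1).
  { apply (g_half_ratio_limit_le_1 psi C M2 Hpsi); [lra|].
    intros u Hu. destruct (HM2 u Hu) as [H1 [H2 _]]. auto. }
  destruct (Hpsi (rho - psi)) as [Ml HMl]; [lra|].
  exists (Rmax Ml M2). intros u Hu.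
  specialize (HMl u (Rle_trans _ _ _ (Rmax_l _ _) Hu)).
  destruct (HM2 u (Rle_trans _ _ _ (Rmax_r _ _) Hu)) as [Hg _].
  pose proof (Rabs_def2 _ _ HMl) as [H1 _].
  assert (H : g (u / 2) / g u < rho) by lra.
  apply (Rmult_lt_compat_r (g u)) in H; auto. unfold Rdiv in H.
  rewrite Rmult_assoc, Rinv_l, Rmult_1_r in H by lra. lra.
Qed.

Lemma AssumptionA_dyadic_regular rho : 1 < rho ->
  exists C U0, 0 < C /\ 0 < U0 /\ dyadic_regular F g rho C U0 /\
    (forall u v, U0 <= u -> u <= v -> g v <= g u).
Proof.
  intros Hrho.
  destruct tail_half_ratio_le as [C [M2 [HC HM2]]].
  destruct g_eventually_pos as [M1 [_ Hgd]].
  destruct (g_half_ratio_eventually_le rho Hrho) as [M3 HM3].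
  destruct HA as [_ [Hg0 _]].
  destruct (Hg0 ((rho - 1) / C)) as [M4 HM4]; [apply Rdiv_lt_0_compat; lra|].
  set (U0 := Rmax (Rmax (Rmax M1 M2) (Rmax M3 M4)) 1).
  assert (HU : forall u, U0 <= u -> M1 <= u /\ M2 <= u /\ M3 <= u /\ M4 <= u /\ 1 <= u).
  { intros u Hu. unfold U0 in Hu.
    pose proof (Rmax_l (Rmax (Rmax M1 M2) (Rmax M3 M4)) 1). pose proof (Rmax_r (Rmax (Rmax M1 M2) (Rmax M3 M4)) 1).
    pose proof (Rmax_l (Rmax M1 M2) (Rmax M3 M4)). pose proof (Rmax_r (Rmax M1 M2) (Rmax M3 M4)).
    pose proof (Rmax_l M1 M2). pose proof (Rmax_r M1 M2). pose proof (Rmax_l M3 M4). pose proof (Rmax_r M3 M4).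
    repeat split; lra. }
  exists C, U0. split; [auto|]. split; [destruct (HU U0 (Rle_refl _)) as [_ [_ [_ [_ H]]]]; lra|].
  split.
  - intros u Hu. destruct (HU u Hu) as [H1 [H2 [H3 [H4 _]]]].
    destruct (HM2 u H2) as [Hg [Hr _]]. repeat split; auto.
    specialize (HM4 u H4). rewrite Rminus_0_r in HM4. pose proof (Rle_abs (g u)).
    assert (Hlt : g u < (rho - 1) / C) by lra. apply (Rmult_lt_compat_l C) in Hlt; auto.
    replace (C * ((rho - 1) / C)) with (rho - 1) in Hlt by (field; lra). lra.
  - intros u v Hu Huv. apply Hgd; auto. apply HU; auto.
Qed.

Hypothesis HF1 : forall u, F u <= 1.
Hypothesis HFmon : forall x y, x <= y -> F y <= F x.

Lemma tail_dyadic_ratio_sum_le k :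
  exists K l0, 0 < K /\ forall l, l0 <= l -> 0 < g l /\
    forall M, sumN (fun m => (F (l / 2 ^ S m) / F l - 1) ^ k / (7 / 4) ^ m) M <= K * g l ^ k.
Proof.
  destruct (exists_gt_1_pow_lt_7_4 (3 * k)) as [rho [Hrho Hrk]].
  destruct (AssumptionA_dyadic_regular rho Hrho) as [C [U0 [HC [HU0 [Hreg Hgmon]]]]].
  destruct (dyadic_ratio_le F g rho C U0 HF ltac:(lra) Hreg HFmon Hgmon HF1 Hrho HC HU0)
    as [K [HK HKbound]].
  set (b := 7 / 4) in *. assert (Hb : 1 < b) by (unfold b; lra).
  set (x := rho ^ (3 * k) / b).
  assert (Hx : 0 <= x < 1).
  { split; [apply Rmult_le_pos; [apply pow_le|left; apply Rinv_0_lt_compat]; lra|].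
    apply (Rmult_lt_reg_r b); [lra|]. unfold x, Rdiv. rewrite Rmult_assoc, Rinv_l by lra. lra. }
  set (K' := K ^ k * rho ^ (3 * k)).
  assert (HK' : 0 < K') by (apply Rmult_lt_0_compat; apply pow_lt; lra).
  exists (K' / (1 - x)), (2 * U0). split; [apply Rdiv_lt_0_compat; lra|].
  intros l Hl. assert (Hgl : 0 < g l) by (apply Hreg; lra). split; auto. intro M.
  assert (Hterm : forall m, (F (l / 2 ^ S m) / F l - 1) ^ k / b ^ m <= K' * g l ^ k * x ^ m).
  { intro m.
    assert (HX1 : 0 <= F (l / 2 ^ S m) / F l - 1).
    { assert (F l <= F (l / 2 ^ S m)).
      { apply HFmon. unfold Rdiv. rewrite <- (Rmult_1_r l) at 2. apply Rmult_le_compat_l; [lra|].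
        rewrite <- Rinv_1. apply Rinv_le_contravar; [lra|apply pow_R1_Rle; lra]. }
      pose proof (HF l). apply (Rmult_le_reg_r (F l)); auto.
      unfold Rdiv. rewrite Rmult_minus_distr_r, Rmult_assoc, Rinv_l by lra. lra. }
    eapply Rle_trans.
    { apply Rmult_le_compat_r; [left; apply Rinv_0_lt_compat, pow_lt; lra|].
      apply pow_incr. split; [exact HX1|apply (HKbound l m); lra]. }
    assert (E : rho ^ (3 * S m * k) = rho ^ (3 * k) * (rho ^ (3 * k)) ^ m)
      by (rewrite <- pow_mult, <- pow_add; f_equal; lia).
    unfold x, K', Rdiv. rewrite !Rpow_mult_distr, <- pow_mult, E, pow_inv. right. ring. }
  eapply Rle_trans; [apply sumN_le; intros m _; apply Hterm|].
  rewrite sumN_scal.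
  replace (K' / (1 - x) * g l ^ k) with (K' * g l ^ k * / (1 - x)) by (unfold Rdiv; ring).
  apply Rmult_le_compat_l; [apply Rmult_le_pos; [lra|apply pow_le; lra]|apply sumN_geometric_le; auto].
Qed.

End AssumptionA.

Lemma rate_bound_lt (e K d x y G S : R) (k : nat) :
  0 < e -> 0 < K -> 0 < d -> 0 < x -> 0 < y -> 0 < G -> S <= K * G ^ k ->
  8 * e ^ k * (2 * x * y) ^ k / d * S < 16 * e ^ k * 2 ^ k * K / d * (x / / y * G) ^ k.
Proof.
  intros He HK Hd Hx Hy HG HS.
  set (B := 8 * e ^ k * (2 * x * y) ^ k / d).
  assert (HB : 0 < B).
  { apply Rdiv_lt_0_compat; auto.
    apply Rmult_lt_0_compat; [apply Rmult_lt_0_compat; [lra|]|]; apply pow_lt; auto.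
    apply Rmult_lt_0_compat; lra. }
  assert (HKG : 0 < K * G ^ k) by (apply Rmult_lt_0_compat; auto; apply pow_lt; auto).
  replace (16 * e ^ k * 2 ^ k * K / d * (x / / y * G) ^ k) with (2 * (B * (K * G ^ k))).
  - assert (B * S <= B * (K * G ^ k)) by (apply Rmult_le_compat_l; lra). nra.
  - unfold B, Rdiv. rewrite Rinv_inv, !Rpow_mult_distr. field. lra.
Qed.

Theorem corollary3p9
  (Ps : ProbSpace) (sigma : nat -> Omega Ps -> R)
  (g kf : R -> R) (k : nat) (ell delta : nat -> R) :
  iid Ps sigma ->
  Pr Ps (fun w => sigma 0%nat w <= 0) = 0 ->
  (forall u, 0 < Pr Ps (fun w => sigma 0%nat w > u)) ->
  (forall v, 0 < v ->
     lim_infty (fun u => Ltail Ps (sigma 0%nat) (u * v) / Ltail Ps (sigma 0%nat) u) 1) ->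
  AssumptionA (Ltail Ps (sigma 0%nat)) g kf ->
  (1 <= k)%nat ->
  (forall i, 0 < ell i) ->
  (forall i, 0 < delta i) ->
  seq_to_infty ell ->
  exists c, 0 < c /\
    exists N, forall i, (N <= i)%nat ->
      Pr Ps (fun w => S_ord sigma i k w > ell i * delta i /\
                      (forall j, (1 <= j <= i)%nat -> sigma j w <= ell i))
      / Pr Ps (fun w => forall j, (1 <= j <= i)%nat -> sigma j w <= ell i)
      < c / delta i
        * (INR i / Ltail Ps (sigma 0%nat) (ell i) * g (ell i)) ^ k.
Proof.
  intros Hiid _ HF Hsv HA Hk Hell Hdelta Hinf.
  pose proof (proj1 Hiid) as Hrv.
  set (F := tail_prob Ps sigma).
  assert (HF1 : forall u, F u <= 1) by (intro; apply Pr_le_1, rv_gt, Hrv).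
  assert (HFmon : forall x y, x <= y -> F y <= F x)
    by (intros x y H; apply Pr_le_mono; try apply rv_gt, Hrv; intros w Hw; lra).
  assert (HF0 := Pr_gt_vanishes Ps _ (Hrv 0%nat)).
  destruct (tail_dyadic_ratio_sum_le F g kf HF HA Hsv HF0 HF1 HFmon k) as [K [l0 [HK Hsum]]].
  destruct (HF0 (/ 2) ltac:(lra)) as [l1 Hhalf].
  exists (16 * exp 1 ^ k * 2 ^ k * K). split.
  { repeat apply Rmult_lt_0_compat; try lra; apply pow_lt; [apply exp_pos|lra]. }
  destruct (Hinf (Rmax l0 l1)) as [N HN]. exists (max N 1). intros i Hi.
  set (l := ell i). set (d := delta i).
  assert (Hl : Rmax l0 l1 <= l) by (apply HN; lia).
  pose proof (Rmax_l l0 l1). pose proof (Rmax_r l0 l1).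
  destruct (Hsum l ltac:(lra)) as [Hgl HsumM].
  rewrite Pr_all_le by exact Hiid.
  destruct (Pr_S_ord_gt_div_le Ps sigma Hiid i l d k Hk (Hell i) (Hdelta i)
              (conj (HF l) (Rlt_le _ _ (Hhalf l ltac:(lra))))) as [M HM].
  eapply Rle_lt_trans; [exact HM|].
  apply rate_bound_lt; [apply exp_pos|exact HK|apply Hdelta|apply lt_0_INR; lia|apply HF|exact Hgl|apply HsumM].
Qed.
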